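(* Fix $T>0$. Let $\theta:[0,T]\to[0,1]$ be continuous and let $\beta:[0,T]\to[\beta_*,\beta^*]$ be continuous. Then there exists a unique solution $\boldsymbol{x}=(S,E_{fc},E_{pc},I_{fc},I_{pc},H,R)$ on $[0,T]$ of the initial value problem \begin{align*} S' &= p_S-\Gamma S-\mu S,\\ E_{fc}' &= p_{Efc}+\theta\Gamma S-\Big(\gamma_{fc}+\gamma^{+}+\sigma_E+\mu-\tfrac{\gamma_E}{N}E_{pc}\Big)E_{fc},\\ E_{pc}' &= p_{Epc}+(1-\theta)\Gamma S-\Big(\gamma_{pc}+\gamma^{-}+\sigma_E+\mu+\tfrac{\gamma_E}{N}E_{fc}\Big)E_{pc},\\ I_{fc}' &= p_{Ifc}+\gamma_{fc}E_{fc}+\gamma^{-}E_{pc}-\Big(\delta+\sigma_I+d_I+\mu-\tfrac{\gamma_I}{N}I_{pc}\Big)I_{fc},\\ I_{pc}' &= p_{Ipc}+\gamma_{pc}E_{pc}+\gamma^{+}E_{fc}-\Big(\delta+\sigma_I+d_I+\mu+\tfrac{\gamma_I}{N}I_{fc}\Big)I_{pc},\\ H' &= p_H+\delta(I_{fc}+I_{pc})-(\sigma_H+d_H+\mu)H,\\ R' &= p_R+\sigma_E(E_{fc}+E_{pc})+\sigma_I(I_{fc}+I_{pc})+\sigma_H H-\mu R, \end{align*} with $N=S+E_{fc}+E_{pc}+I_{fc}+I_{pc}+H+R$, $\Gamma=\frac{\beta}{N}\big(\epsilon_{Efc}E_{fc}+\epsilon_{Epc}E_{pc}+\epsilon_{Ifc}I_{fc}+\epsilon_{Ipc}I_{pc}+\epsilon_H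 H\big)$, and initial data $S(0)=S_0>0$, $E_{fc}(0),E_{pc}(0),I_{fc}(0),I_{pc}(0),H(0),R(0)\ge 0$. Moreover, there is a constant $C>0$ independent of $\beta$ such that if $\boldsymbol{x}$ and $\hat{\boldsymbol{x}}$ are the solutions corresponding to two such continuous functions $\beta$ and $\hat\beta$ (with values in $[\beta_*,\beta^*]$), then for all $t\in[0,T]$, \[ |\boldsymbol{x}(t)-\hat{\boldsymbol{x}}(t)|^2\le C\int_0^t|\beta(s)-\hat\beta(s)|^2\,ds . \]
   Context: Standing assumptions: the input functions $p_S,p_{Efc},p_{Epc},p_{Ifc},p_{Ipc},p_H,p_R$ are bounded, nonnegative, smooth functions of $t$; the parameters $\mu,\epsilon_{Efc},\epsilon_{Epc},\epsilon_{Ifc},\epsilon_{Ipc},\epsilon_H,\gamma_{fc},\gamma_{pc},\gamma^{+},\gamma^{-},\delta,d_I,d_H,\sigma_E,\sigma_I,\sigma_H$ are positive constants; $\gamma_E,\gamma_I$ are real constants satisfying $|\gamma_E|<\min\{\gamma_{fc}+\gamma^{+}+\sigma_E+\mu,\ \gamma_{pc}+\gamma^{-}+\sigma_E+\mu\}$ and $|\gamma_I|<\delta+\sigma_I+d_I+\mu$; and $[\beta_*,\beta^*]\subset(0,1]$. *)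

From Stdlib Require Import Reals.
From Coquelicot Require Import Coquelicot.
Open Scope R_scope.

Record state : Type := mkState {
  xS : R; xEfc : R; xEpc : R; xIfc : R; xIpc : R; xH : R; xR : R }.

Record params : Type := mkParams {
  mu : R; eps_Efc : R; eps_Epc : R; eps_Ifc : R; eps_Ipc : R; eps_H : R;
  gam_fc : R; gam_pc : R; gam_plus : R; gam_minus : R; delta : R;
  d_I : R; d_H : R; sig_E : R; sig_I : R; sig_H : R;
  gam_E : R; gam_I : R }.

Definition params_ok (P : params) : Prop :=
  0 < mu P /\ 0 < eps_Efc P /\ 0 < eps_Epc P /\ 0 < eps_Ifc P /\
  0 < eps_Ipc P /\ 0 < eps_H P /\ 0 < gam_fc P /\ 0 < gam_pc P /\
  0 < gam_plus P /\ 0 < gam_minus P /\ 0 < delta P /\ 0 < d_I P /\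
  0 < d_H P /\ 0 < sig_E P /\ 0 < sig_I P /\ 0 < sig_H P /\
  Rabs (gam_E P) < Rmin (gam_fc P + gam_plus P + sig_E P + mu P)
                        (gam_pc P + gam_minus P + sig_E P + mu P) /\
  Rabs (gam_I P) < delta P + sig_I P + d_I P + mu P.

Record inputs : Type := mkInputs {
  pS : R -> R; pEfc : R -> R; pEpc : R -> R; pIfc : R -> R;
  pIpc : R -> R; pH : R -> R; pR : R -> R }.

Definition input_ok (p : R -> R) : Prop :=
  (exists M, forall t, Rabs (p t) <= M) /\
  (forall t, 0 <= p t) /\
  (forall (n : nat) (t : R), ex_derive_n p n t).

Definition inputs_ok (I : inputs) : Prop :=
  input_ok (pS I) /\ input_ok (pEfc I) /\ input_ok (pEpc I) /\
  input_ok (pIfc I) /\ input_ok (pIpc I) /\ input_ok (pH I) /\ input_ok (pR I).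

Definition cont_on (a b : R) (f : R -> R) : Prop :=
  forall t, a <= t <= b -> forall eps, 0 < eps -> exists dlt, 0 < dlt /\
    forall s, a <= s <= b -> Rabs (s - t) < dlt -> Rabs (f s - f t) < eps.

(* f is differentiable on [a,b] with derivative f' (one-sided at the
   endpoints, i.e. derivative relative to [a,b]). *)
Definition deriv_on (a b : R) (f f' : R -> R) : Prop :=
  forall t, a <= t <= b -> forall eps, 0 < eps -> exists dlt, 0 < dlt /\
    forall s, a <= s <= b -> 0 < Rabs (s - t) < dlt ->
      Rabs ((f s - f t) / (s - t) - f' t) < eps.

Definition Ntot (x : state) : R :=
  xS x + xEfc x + xEpc x + xIfc x + xIpc x + xH x + xR x.

Definition Gam (P : params) (b : R) (x : state) : R :=
  b / Ntot x * (eps_Efc P * xEfc x + eps_Epc P * xEpc x + eps_Ifc P * xIfc x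
                + eps_Ipc P * xIpc x + eps_H P * xH x).

Definition rhs (P : params) (I : inputs) (theta beta : R -> R) (t : R)
  (x : state) : state :=
  let N := Ntot x in
  let G := Gam P (beta t) x in
  mkState
    (pS I t - G * xS x - mu P * xS x)
    (pEfc I t + theta t * G * xS x
       - (gam_fc P + gam_plus P + sig_E P + mu P - gam_E P / N * xEpc x) * xEfc x)
    (pEpc I t + (1 - theta t) * G * xS x
       - (gam_pc P + gam_minus P + sig_E P + mu P + gam_E P / N * xEfc x) * xEpc x)
    (pIfc I t + gam_fc P * xEfc x + gam_minus P * xEpc x
       - (delta P + sig_I P + d_I P + mu P - gam_I P / N * xIpc x) * xIfc x)
    (pIpc I t + gam_pc P * xEpc x + gam_plus P * xEfc x
       - (delta P + sig_I P + d_I P + mu P + gam_I P / N * xIfc x) * xIpc x)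
    (pH I t + delta P * (xIfc x + xIpc x) - (sig_H P + d_H P + mu P) * xH x)
    (pR I t + sig_E P * (xEfc x + xEpc x) + sig_I P * (xIfc x + xIpc x)
       + sig_H P * xH x - mu P * xR x).

Definition is_solution (P : params) (I : inputs) (theta beta : R -> R)
  (T : R) (x0 : state) (x : R -> state) : Prop :=
  x 0 = x0 /\
  deriv_on 0 T (fun t => xS (x t))   (fun t => xS   (rhs P I theta beta t (x t))) /\
  deriv_on 0 T (fun t => xEfc (x t)) (fun t => xEfc (rhs P I theta beta t (x t))) /\
  deriv_on 0 T (fun t => xEpc (x t)) (fun t => xEpc (rhs P I theta beta t (x t))) /\
  deriv_on 0 T (fun t => xIfc (x t)) (fun t => xIfc (rhs P I theta beta t (x t))) /\
  deriv_on 0 T (fun t => xIpc (x t)) (fun t => xIpc (rhs P I theta beta t (x t))) /\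
  deriv_on 0 T (fun t => xH (x t))   (fun t => xH   (rhs P I theta beta t (x t))) /\
  deriv_on 0 T (fun t => xR (x t))   (fun t => xR   (rhs P I theta beta t (x t))).

Definition init_ok (x0 : state) : Prop :=
  0 < xS x0 /\ 0 <= xEfc x0 /\ 0 <= xEpc x0 /\ 0 <= xIfc x0 /\
  0 <= xIpc x0 /\ 0 <= xH x0 /\ 0 <= xR x0.

Definition beta_ok (T blo bhi : R) (beta : R -> R) : Prop :=
  cont_on 0 T beta /\ forall t, 0 <= t <= T -> blo <= beta t <= bhi.

Definition dist2 (x y : state) : R :=
  (xS x - xS y)^2 + (xEfc x - xEfc y)^2 + (xEpc x - xEpc y)^2
  + (xIfc x - xIfc y)^2 + (xIpc x - xIpc y)^2 + (xH x - xH y)^2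
  + (xR x - xR y)^2.

(* The right-hand side divides by the total population N and is only locally Lipschitz, so it
   is first replaced by a truncated field (every compartment clamped to a box, N bounded below)
   which is bounded and globally Lipschitz; Picard iteration solves the truncated problem on all
   of [0, T]. Quasi-positivity keeps this solution nonnegative, a bound Mp on the seven inputs
   gives N(t) <= N(0) + 7 Mp t, and S' >= - (sum eps + mu) S keeps S above
   S(0) e^(-(sum eps + mu) T); inside this box the truncation is inactive, so the solution
   solves the original system. Any other solution stays close to it for a while, hence agrees
   with it by Gronwall (using a second, slightly wider truncation), and a continuity argument
   extends the agreement to [0, T]. On the box the field is Lipschitz in (beta, x) with a
   constant independent of beta, and Gronwall's inequality for |x - xhat|^2 gives the
   stability estimate with C = L e^(21 L T). *)

From Stdlib Require Import Reals Lra Lia Classical.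
From Coquelicot Require Import Coquelicot.
Open Scope R_scope.

(** * Calculus on a compact interval *)

Definition clamp (a b x : R) : R := Rmax a (Rmin b x).

Lemma clamp_in a b x : a <= b -> a <= clamp a b x <= b.
Proof. intros; unfold clamp, Rmax, Rmin; repeat destruct Rle_dec; lra. Qed.

Lemma clamp_id a b x : a <= x <= b -> clamp a b x = x.
Proof. intros; unfold clamp, Rmax, Rmin; repeat destruct Rle_dec; lra. Qed.

Lemma clamp_lipschitz a b x y : a <= b -> Rabs (clamp a b x - clamp a b y) <= Rabs (x - y).
Proof.
  intros; unfold clamp, Rmax, Rmin; repeat destruct Rle_dec;
  unfold Rabs; repeat destruct Rcase_abs; lra.
Qed.

Lemma continuous_of_lipschitz (f : R -> R) M :
  (forall s t, Rabs (f s - f t) <= M * Rabs (s - t)) -> forall t, continuous f t.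
Proof.
  intros Hf t. apply continuity_pt_filterlim. intros eps Heps.
  pose proof (Rabs_pos M) as HM.
  exists (eps / (Rabs M + 1)). split; [apply Rdiv_lt_0_compat; lra|].
  intros s [_ Hs]. simpl in *. unfold Rdist in *.
  specialize (Hf s t). pose proof (Rabs_pos (s - t)).
  assert (M * Rabs (s - t) <= Rabs M * Rabs (s - t))
    by (apply Rmult_le_compat_r; auto; apply Rle_abs).
  assert (Rabs (s - t) * (Rabs M + 1) < eps).
  { apply (Rmult_lt_compat_r (Rabs M + 1)) in Hs; [|lra]. unfold Rdiv in Hs.
    rewrite Rmult_assoc, Rinv_l in Hs by lra. lra. }
  nra.
Qed.

Lemma continuous_clamp a b t : a <= b -> continuous (clamp a b) t.
Proof.
  intros Hab. apply (continuous_of_lipschitz _ 1). intros.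
  rewrite Rmult_1_l. apply clamp_lipschitz, Hab.
Qed.

Lemma continuous_Rplus (f g : R -> R) t :
  continuous f t -> continuous g t -> continuous (fun s => f s + g s) t.
Proof. apply (continuous_plus f g). Qed.

Lemma continuous_Rminus (f g : R -> R) t :
  continuous f t -> continuous g t -> continuous (fun s => f s - g s) t.
Proof. apply (continuous_minus f g). Qed.

Lemma continuous_Rmult (f g : R -> R) t :
  continuous f t -> continuous g t -> continuous (fun s => f s * g s) t.
Proof. apply (continuous_mult f g). Qed.

Lemma continuous_Rabs (f : R -> R) t : continuous f t -> continuous (fun s => Rabs (f s)) t.
Proof. intros Hf. apply (continuous_comp f Rabs); [exact Hf | apply (@continuous_abs R_AbsRing)]. Qed.

(* Continuity relative to [a, b] is continuity of [f \o clamp a b] on all of R;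
   this lets Coquelicot's calculus of continuous functions do the work. *)
Lemma cont_on_continuous_clamp a b f : a <= b -> cont_on a b f ->
  forall t, continuous (fun s => f (clamp a b s)) t.
Proof.
  intros Hab Hf t. apply continuity_pt_filterlim. intros eps Heps.
  destruct (Hf (clamp a b t) (clamp_in a b t Hab) eps Heps) as [d [Hd H]].
  exists d; split; [lra|]. intros s [_ Hs]. simpl in *. unfold Rdist in *.
  destruct (Req_dec (clamp a b s) (clamp a b t)) as [E|E].
  - rewrite E, Rminus_diag, Rabs_R0; lra.
  - apply H; [apply clamp_in; auto|].
    pose proof (clamp_lipschitz a b s t Hab). lra.
Qed.

Lemma cont_on_of_continuous_clamp a b f : a <= b ->
  (forall t, a <= t <= b -> continuous (fun s => f (clamp a b s)) t) -> cont_on a b f.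
Proof.
  intros Hab Hf t Ht eps Heps.
  destruct (proj2 (continuity_pt_filterlim _ _) (Hf t Ht) eps Heps) as [d [Hd H]].
  exists d; split; [lra|]. intros s Hs Hst.
  destruct (Req_dec t s) as [<-|E].
  { rewrite Rminus_diag, Rabs_R0; lra. }
  specialize (H s (conj (conj I E) Hst)). simpl in H. unfold Rdist in H.
  rewrite !clamp_id in H by lra. exact H.
Qed.

Lemma cont_on_of_continuous a b f : a <= b -> (forall t, continuous f t) -> cont_on a b f.
Proof.
  intros Hab Hf. apply cont_on_of_continuous_clamp; auto. intros t _.
  apply (continuous_comp (clamp a b) f); [apply continuous_clamp, Hab | apply Hf].
Qed.

Lemma cont_on_comp a b f g : a <= b -> cont_on a b f -> (forall x, continuous g x) ->
  cont_on a b (fun s => g (f s)).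
Proof.
  intros Hab Hf Hg. apply cont_on_of_continuous_clamp; auto. intros t _.
  apply (continuous_comp (fun s => f (clamp a b s)) g);
    [apply cont_on_continuous_clamp; auto | apply Hg].
Qed.

Lemma cont_on_plus a b f g : a <= b -> cont_on a b f -> cont_on a b g ->
  cont_on a b (fun s => f s + g s).
Proof.
  intros Hab Hf Hg. apply cont_on_of_continuous_clamp; auto. intros t _.
  apply continuous_Rplus; apply cont_on_continuous_clamp; auto.
Qed.

Lemma cont_on_minus a b f g : a <= b -> cont_on a b f -> cont_on a b g ->
  cont_on a b (fun s => f s - g s).
Proof.
  intros Hab Hf Hg. apply cont_on_of_continuous_clamp; auto. intros t _.
  apply continuous_Rminus; apply cont_on_continuous_clamp; auto.
Qed.

Lemma cont_on_mult a b f g : a <= b -> cont_on a b f -> cont_on a b g ->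
  cont_on a b (fun s => f s * g s).
Proof.
  intros Hab Hf Hg. apply cont_on_of_continuous_clamp; auto. intros t _.
  apply continuous_Rmult; apply cont_on_continuous_clamp; auto.
Qed.

Lemma cont_on_subinterval a b a' b' f : a <= a' -> b' <= b -> cont_on a b f -> cont_on a' b' f.
Proof.
  intros Ha Hb Hf t Ht eps Heps. destruct (Hf t ltac:(lra) eps Heps) as [d [Hd H]].
  exists d; split; auto. intros s Hs. apply H. lra.
Qed.

Lemma deriv_on_is_derive a b f f' t : deriv_on a b f f' -> a < t < b ->
  is_derive f t (f' t).
Proof.
  intros Hd Ht. apply is_derive_Reals. intros eps Heps.
  destruct (Hd t ltac:(lra) eps Heps) as [d [Hd0 H]].
  set (r := Rmin d (Rmin (t - a) (b - t))).
  assert (Hr : 0 < r) by (repeat apply Rmin_pos; lra).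
  assert (r <= d /\ r <= t - a /\ r <= b - t) as [Hrd [Hra Hrb]].
  { unfold r. pose proof (Rmin_l d (Rmin (t - a) (b - t))).
    pose proof (Rmin_r d (Rmin (t - a) (b - t))).
    pose proof (Rmin_l (t - a) (b - t)). pose proof (Rmin_r (t - a) (b - t)). lra. }
  exists (mkposreal r Hr). intros h Hh0 Hh. simpl in Hh.
  specialize (H (t + h)). replace (t + h - t) with h in H by ring. apply H.
  - apply Rabs_def2 in Hh. lra.
  - split; [apply Rabs_pos_lt; auto | lra].
Qed.

Lemma deriv_on_cont_on a b f f' : deriv_on a b f f' -> cont_on a b f.
Proof.
  intros Hd t Ht eps Heps.
  destruct (Hd t Ht 1 Rlt_0_1) as [d [Hd0 H]].
  set (K := Rabs (f' t) + 1).
  assert (HK : 0 < K) by (unfold K; pose proof (Rabs_pos (f' t)); lra).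
  assert (Hp : 0 < Rmin d (eps / K)) by (apply Rmin_pos; [|apply Rdiv_lt_0_compat]; auto).
  exists (Rmin d (eps / K)); split; auto. intros s Hs Hst.
  destruct (Req_dec s t) as [->|E].
  { rewrite Rminus_diag, Rabs_R0; lra. }
  assert (H0 : 0 < Rabs (s - t)) by (apply Rabs_pos_lt; lra).
  specialize (H s Hs (conj H0 (Rlt_le_trans _ _ _ Hst (Rmin_l _ _)))).
  replace (f s - f t) with (((f s - f t) / (s - t) - f' t) * (s - t) + f' t * (s - t))
    by (field; lra).
  eapply Rle_lt_trans; [apply Rabs_triang|]. rewrite !Rabs_mult.
  assert (Hst2 : Rabs (s - t) < eps / K) by (eapply Rlt_le_trans; [exact Hst | apply Rmin_r]).
  assert (Rabs (s - t) * K < eps).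
  { apply (Rmult_lt_compat_r K) in Hst2; auto. unfold Rdiv in Hst2.
    rewrite Rmult_assoc, Rinv_l in Hst2 by lra. lra. }
  unfold K in *. pose proof (Rabs_pos (f' t)).
  pose proof (Rabs_pos ((f s - f t) / (s - t) - f' t)). nra.
Qed.

Lemma deriv_on_of_is_derive a b f F f' : (forall t, a <= t <= b -> f t = F t) ->
  (forall t, a <= t <= b -> is_derive F t (f' t)) -> deriv_on a b f f'.
Proof.
  intros E Hd t Ht eps Heps.
  destruct (proj1 (is_derive_Reals _ _ _) (Hd t Ht) eps Heps) as [d H].
  exists d; split; [apply cond_pos|]. intros s Hs [Hs0 Hs1].
  rewrite !E by lra.
  assert (Hne : s - t <> 0) by (intro Z; rewrite Z, Rabs_R0 in Hs0; lra).
  specialize (H (s - t) Hne Hs1). replace (t + (s - t)) with s in H by ring. exact H.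
Qed.

Lemma deriv_on_ext a b f f' g' : (forall t, a <= t <= b -> f' t = g' t) ->
  deriv_on a b f f' -> deriv_on a b f g'.
Proof.
  intros E Hd t Ht eps Heps. destruct (Hd t Ht eps Heps) as [d [Hd0 H]].
  exists d; split; auto. intros. rewrite <- E; auto.
Qed.

Lemma exp_le_exp_of_le x y : x <= y -> exp x <= exp y.
Proof. intros [H|<-]; [left; apply exp_increasing, H | lra]. Qed.

Lemma le_of_derive_nonpos a b F F' : a <= b ->
  (forall t, a < t < b -> is_derive F t (F' t)) -> cont_on a b F ->
  (forall t, a <= t <= b -> F' t <= 0) -> F b <= F a.
Proof.
  intros Hab Hd Hc Hneg.
  destruct (Req_dec a b) as [<-|E]; [lra|].
  destruct (MVT_gen (fun s => F (clamp a b s)) a b F') as [c [Hc1 Hc2]].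
  - intros x Hx. rewrite Rmin_left, Rmax_right in Hx by lra.
    apply is_derive_ext_loc with F; [|apply Hd; lra].
    assert (Hp : 0 < Rmin (x - a) (b - x)) by (apply Rmin_pos; lra).
    exists (mkposreal _ Hp). intros y Hy. apply Rabs_def2 in Hy. simpl in Hy.
    pose proof (Rmin_l (x - a) (b - x)). pose proof (Rmin_r (x - a) (b - x)).
    rewrite clamp_id; auto. unfold minus, plus, opp in Hy; simpl in Hy. lra.
  - intros x _. apply continuity_pt_filterlim, cont_on_continuous_clamp; auto.
  - rewrite Rmin_left, Rmax_right in Hc1 by lra.
    rewrite !clamp_id in Hc2 by lra.
    specialize (Hneg c Hc1). nra.
Qed.

Lemma le_of_derive_nonneg a b F F' : a <= b ->
  (forall t, a < t < b -> is_derive F t (F' t)) -> cont_on a b F ->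
  (forall t, a <= t <= b -> 0 <= F' t) -> F a <= F b.
Proof.
  intros Hab Hd Hc Hpos.
  enough (- F b <= - F a) by lra.
  apply (le_of_derive_nonpos a b (fun s => - F s) (fun s => - F' s) Hab).
  - intros t Ht. exact (is_derive_opp F t (F' t) (Hd t Ht)).
  - apply (cont_on_comp a b F Ropp Hab Hc). intros v.
    apply (continuous_opp (fun x : R => x)), continuous_id.
  - intros t Ht. specialize (Hpos t Ht). lra.
Qed.

Lemma ex_RInt_of_continuous (g : R -> R) a b : (forall t, continuous g t) -> ex_RInt g a b.
Proof. intros H. apply (ex_RInt_continuous (V := R_CompleteNormedModule)). intros; apply H. Qed.

Lemma is_derive_RInt_upper (g : R -> R) a t : (forall s, continuous g s) ->
  is_derive (fun s => RInt g a s) t (g t).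
Proof.
  intros H. apply (is_derive_RInt g (fun s => RInt g a s) a t); [|apply H].
  apply filter_forall. intros b. apply (RInt_correct (V := R_CompleteNormedModule)).
  apply ex_RInt_of_continuous, H.
Qed.

Lemma continuous_RInt_upper (g : R -> R) a t : (forall s, continuous g s) ->
  continuous (fun s => RInt g a s) t.
Proof.
  intros H. apply (@ex_derive_continuous R_AbsRing R_NormedModule).
  eexists. apply is_derive_RInt_upper, H.
Qed.

Lemma abs_RInt_le_dominated (f g : R -> R) a b : a <= b -> ex_RInt f a b -> ex_RInt g a b ->
  (forall s, a < s < b -> Rabs (f s) <= g s) -> Rabs (RInt f a b) <= RInt g a b.
Proof.
  intros Hab Hf Hg H. eapply Rle_trans; [apply abs_RInt_le; auto|].
  apply RInt_le; auto. apply (ex_RInt_norm f); auto.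
Qed.

Lemma abs_RInt_le_const_dist (f : R -> R) a b M : ex_RInt f a b ->
  (forall s, Rmin a b <= s <= Rmax a b -> Rabs (f s) <= M) ->
  Rabs (RInt f a b) <= M * Rabs (b - a).
Proof.
  intros Hf H. destruct (Rle_dec a b).
  - rewrite Rmin_left, Rmax_right in H by lra. rewrite (Rabs_right (b - a)) by lra.
    rewrite Rmult_comm. apply abs_RInt_le_const; auto.
  - rewrite Rmin_right, Rmax_left in H by lra.
    rewrite <- (opp_RInt_swap f b a (ex_RInt_swap f a b Hf)).
    change (opp (RInt f b a)) with (- RInt f b a). rewrite Rabs_Ropp.
    rewrite (Rabs_left (b - a)) by lra. replace (- (b - a)) with (a - b) by ring. rewrite Rmult_comm.
    apply abs_RInt_le_const; [lra | apply ex_RInt_swap, Hf | exact H].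
Qed.

Lemma RInt_minus_lower (g : R -> R) a s t : (forall x, continuous g x) ->
  RInt g a t - RInt g a s = RInt g s t.
Proof.
  intros H. rewrite <- (RInt_Chasles g a s t) by (apply ex_RInt_of_continuous, H).
  change (plus (RInt g a s) (RInt g s t)) with (RInt g a s + RInt g s t). ring.
Qed.

Lemma RInt_minus_R (f g : R -> R) a b : ex_RInt f a b -> ex_RInt g a b ->
  RInt (fun s => f s - g s) a b = RInt f a b - RInt g a b.
Proof. intros Hf Hg. apply (RInt_minus (V := R_CompleteNormedModule)); auto. Qed.

Lemma RInt_scal_exp c K t : 0 < K ->
  RInt (fun s => c * exp (K * s)) 0 t = c * (exp (K * t) - 1) / K.
Proof.
  intros HK. apply is_RInt_unique.
  replace (c * (exp (K * t) - 1) / K) with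
    (minus ((fun s => c * exp (K * s) / K) t) ((fun s => c * exp (K * s) / K) 0)).
  2:{ unfold minus, plus, opp; simpl. rewrite Rmult_0_r, exp_0. field. lra. }
  apply (is_RInt_derive (V := R_CompleteNormedModule) (fun s => c * exp (K * s) / K)).
  - intros x _. auto_derive; auto. field. lra.
  - intros x _. apply (@ex_derive_continuous R_AbsRing R_NormedModule). auto_derive. auto.
Qed.

Lemma ex_RInt_of_cont_on (g : R -> R) a b : a <= b -> cont_on a b g -> ex_RInt g a b.
Proof.
  intros Hab Hg. apply ex_RInt_ext with (fun s => g (clamp a b s)).
  - intros x Hx. rewrite Rmin_left, Rmax_right in Hx by lra. rewrite clamp_id; lra.
  - apply ex_RInt_of_continuous, cont_on_continuous_clamp; auto.
Qed.

Lemma gronwall a b W W' g c : a <= b -> 0 <= c ->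
  (forall t, a < t < b -> is_derive W t (W' t)) -> cont_on a b W ->
  cont_on a b g -> (forall t, a <= t <= b -> 0 <= g t) ->
  (forall t, a <= t <= b -> W' t <= c * W t + g t) -> W a <= 0 ->
  forall t, a <= t <= b -> W t <= exp (c * (t - a)) * RInt g a t.
Proof.
  intros Hab Hc HW HWc Hg Hg0 Hineq HWa t Ht.
  set (gc := fun s => g (clamp a b s)).
  assert (Hgc : forall s, continuous gc s) by (apply cont_on_continuous_clamp; auto).
  assert (Egc : forall s, a <= s <= b -> gc s = g s) by (intros; unfold gc; rewrite clamp_id; auto).
  set (G := fun s => RInt gc a s).
  set (e := fun s => exp (- (c * (s - a)))).
  assert (He : forall s, is_derive e s (- c * e s)).
  { intros s. unfold e. auto_derive; auto. unfold Rminus. ring. }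
  (* [W e - G] is nonincreasing because [g >= 0] and [e <= 1]. *)
  assert (Hle : W t * e t - G t <= W a * e a - G a).
  { apply (le_of_derive_nonpos a t (fun s => W s * e s - G s)
             (fun s => W' s * e s + W s * (- c * e s) - gc s)); [lra| | |].
    - intros s Hs. apply (is_derive_minus (fun s => W s * e s) G).
      + apply (is_derive_mult W e); [apply HW; lra | apply He | intros; apply Rmult_comm].
      + apply is_derive_RInt_upper, Hgc.
    - apply cont_on_minus; [lra| |].
      + apply cont_on_mult; [lra | apply cont_on_subinterval with a b; auto; lra |].
        apply cont_on_of_continuous; [lra|]. intros x.
        apply (@ex_derive_continuous R_AbsRing R_NormedModule e). eexists; apply He.
      + apply cont_on_of_continuous; [lra|]. intros; apply continuous_RInt_upper, Hgc.
    - intros s Hs. rewrite Egc by lra.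
      specialize (Hineq s ltac:(lra)). specialize (Hg0 s ltac:(lra)).
      assert (0 < e s) by apply exp_pos.
      assert (e s <= 1) by (rewrite <- exp_0; apply exp_le_exp_of_le; nra).
      assert (W' s * e s <= (c * W s + g s) * e s) by (apply Rmult_le_compat_r; lra).
      assert (g s * (e s - 1) <= 0) by nra.
      nra. }
  unfold G, e in Hle. rewrite Rminus_diag, Rmult_0_r, Ropp_0, exp_0, RInt_point in Hle.
  change zero with 0 in Hle.
  rewrite (RInt_ext gc g) in Hle
    by (intros x Hx; rewrite Rmin_left, Rmax_right in Hx by lra; apply Egc; lra).
  assert (Hprod : exp (c * (t - a)) * exp (- (c * (t - a))) = 1)
    by (rewrite <- exp_plus, Rplus_opp_r; apply exp_0).
  assert (Hscaled : W t * exp (- (c * (t - a))) <= RInt g a t) by lra.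
  apply (Rmult_le_compat_l (exp (c * (t - a)))) in Hscaled; [|left; apply exp_pos].
  rewrite <- Rmult_assoc, (Rmult_comm _ (W t)), Rmult_assoc, Hprod, Rmult_1_r in Hscaled.
  exact Hscaled.
Qed.

Definition neg_part_sq (x : R) : R := (Rmin x 0) ^ 2.

Lemma is_derive_neg_part_sq x : is_derive neg_part_sq x (2 * Rmin x 0).
Proof.
  destruct (Rtotal_order x 0) as [H|[->|H]].
  - apply is_derive_ext_loc with (fun y => y ^ 2).
    + assert (Hp : 0 < - x) by lra. exists (mkposreal _ Hp). intros y Hy.
      apply Rabs_def2 in Hy. unfold minus, plus, opp in Hy; simpl in Hy.
      unfold neg_part_sq. rewrite Rmin_left; lra.
    + rewrite Rmin_left by lra. auto_derive; auto. ring.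
  - apply is_derive_Reals. intros eps Heps. exists (mkposreal _ Heps).
    intros h Hh0 Hh. simpl in Hh. unfold neg_part_sq.
    rewrite Rplus_0_l, (Rmin_left 0 0) by lra.
    unfold Rmin; destruct Rle_dec.
    + replace ((h ^ 2 - 0 ^ 2) / h - 2 * 0) with h by (field; auto). exact Hh.
    + replace ((0 ^ 2 - 0 ^ 2) / h - 2 * 0) with 0 by (field; auto). rewrite Rabs_R0; lra.
  - apply is_derive_ext_loc with (fun _ => 0).
    + exists (mkposreal _ H). intros y Hy.
      apply Rabs_def2 in Hy. unfold minus, plus, opp in Hy; simpl in Hy.
      unfold neg_part_sq. rewrite Rmin_right by lra. simpl. ring.
    + rewrite Rmin_right by lra. auto_derive; auto. ring.
Qed.

(* [neg_part_sq u] is C^1, vanishes at [a] and is nonincreasing. *)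
Lemma deriv_on_nonneg a b u u' : a <= b -> deriv_on a b u u' -> 0 <= u a ->
  (forall t, a <= t <= b -> u t < 0 -> 0 <= u' t) -> forall t, a <= t <= b -> 0 <= u t.
Proof.
  intros Hab Hd Ha Hs t Ht.
  assert (Hle : neg_part_sq (u t) <= neg_part_sq (u a)).
  { apply (le_of_derive_nonpos a t (fun s => neg_part_sq (u s))
             (fun s => u' s * (2 * Rmin (u s) 0))); [lra| | |].
    - intros s Hs'. apply (is_derive_comp neg_part_sq u); [apply is_derive_neg_part_sq|].
      apply (deriv_on_is_derive a b); auto; lra.
    - apply cont_on_comp; [lra| |].
      + apply cont_on_subinterval with a b; [lra | lra | eapply deriv_on_cont_on, Hd].
      + intros x. apply (@ex_derive_continuous R_AbsRing R_NormedModule).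
        eexists; apply is_derive_neg_part_sq.
    - intros s Hs'. destruct (Rlt_dec (u s) 0).
      + specialize (Hs s ltac:(lra) r). rewrite Rmin_left by lra. nra.
      + rewrite Rmin_right by lra. lra. }
  unfold neg_part_sq in Hle. rewrite (Rmin_right (u a)) in Hle by lra.
  destruct (Rlt_dec (u t) 0); [|lra].
  rewrite Rmin_left in Hle by lra. nra.
Qed.

Lemma half_pow_pos n : 0 < (/ 2) ^ n.
Proof. apply pow_lt; lra. Qed.

Lemma half_pow_antimono n m : (n <= m)%nat -> (/ 2) ^ m <= (/ 2) ^ n.
Proof. induction 1 as [|m _ IH]; [lra|]. simpl. pose proof (half_pow_pos m). lra. Qed.

Lemma half_pow_small K eps : 0 < eps -> exists N, K * (/ 2) ^ N < eps.
Proof.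
  intros He. destruct (Rle_lt_dec K 0).
  - exists 0%nat. simpl. lra.
  - destruct (pow_lt_1_zero (/ 2) ltac:(rewrite Rabs_right; lra) (eps / K)
                ltac:(apply Rdiv_lt_0_compat; lra)) as [N HN].
    exists N. specialize (HN N (le_n N)). rewrite Rabs_right in HN by (left; apply half_pow_pos).
    apply (Rmult_lt_compat_l K) in HN; auto.
    replace (K * (eps / K)) with eps in HN by (field; lra). exact HN.
Qed.

Lemma le_of_half_pow_bound z w K : (forall n, z <= w + K * (/ 2) ^ n) -> z <= w.
Proof.
  intros H. destruct (Rle_lt_dec z w) as [|Hlt]; auto.
  destruct (half_pow_small K (z - w) ltac:(lra)) as [N HN]. specialize (H N). lra.
Qed.

Lemma Lim_seq_half_pow_bound (u : nat -> R) C :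
  (forall n m, (n <= m)%nat -> Rabs (u m - u n) <= C * (/ 2) ^ n) ->
  forall n, Rabs (u n - Lim_seq u) <= C * (/ 2) ^ n.
Proof.
  intros Hc n.
  assert (HC0 : 0 <= C).
  { pose proof (Hc 0%nat 0%nat (le_n 0)) as H0.
    rewrite Rminus_diag, Rabs_R0, pow_O, Rmult_1_r in H0. exact H0. }
  assert (Hex : ex_finite_lim_seq u).
  { apply ex_lim_seq_cauchy_corr. intros eps.
    destruct (half_pow_small C eps (cond_pos eps)) as [N HN]. exists N.
    assert (HC : forall k, (N <= k)%nat -> C * (/ 2) ^ k <= C * (/ 2) ^ N).
    { intros k Hk. apply Rmult_le_compat_l; [exact HC0 | apply half_pow_antimono, Hk]. }
    intros p q Hp Hq. destruct (Nat.le_ge_cases p q) as [Hle|Hle].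
    - rewrite <- Rabs_Ropp, Ropp_minus_distr. pose proof (Hc p q Hle). pose proof (HC p Hp). lra.
    - pose proof (Hc q p Hle). pose proof (HC q Hq). lra. }
  pose proof (proj1 (is_lim_seq_Reals _ _) (Lim_seq_correct' u Hex)) as Hl.
  apply Rle_plus_epsilon. intros eps Heps. destruct (Hl eps Heps) as [N HN].
  specialize (HN (Nat.max n N) ltac:(lia)). unfold Rdist in HN.
  specialize (Hc n (Nat.max n N) ltac:(lia)).
  replace (u n - Lim_seq u) with (- (u (Nat.max n N) - u n) + (u (Nat.max n N) - Lim_seq u))
    by ring.
  eapply Rle_trans; [apply Rabs_triang|]. rewrite Rabs_Ropp. lra.
Qed.

(** * States as vectors of R^7 *)

(* Every index [i >= 6] denotes the R compartment. *)
Definition coord (i : nat) (x : state) : R :=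
  match i with
  | 0%nat => xS x | 1%nat => xEfc x | 2%nat => xEpc x | 3%nat => xIfc x
  | 4%nat => xIpc x | 5%nat => xH x | _ => xR x
  end.

Definition state_of (f : nat -> R) : state :=
  mkState (f 0%nat) (f 1%nat) (f 2%nat) (f 3%nat) (f 4%nat) (f 5%nat) (f 6%nat).

Definition sum7 (f : nat -> R) : R :=
  f 0%nat + f 1%nat + f 2%nat + f 3%nat + f 4%nat + f 5%nat + f 6%nat.

Definition l1dist (x y : state) : R := sum7 (fun i => Rabs (coord i x - coord i y)).

Lemma state_ext x y : (forall i, coord i x = coord i y) -> x = y.
Proof.
  intros H. destruct x, y.
  pose proof (H 0%nat); pose proof (H 1%nat); pose proof (H 2%nat); pose proof (H 3%nat);
  pose proof (H 4%nat); pose proof (H 5%nat); pose proof (H 6%nat). simpl in *. subst. reflexivity.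
Qed.

Lemma sum7_le (f g : nat -> R) : (forall i, f i <= g i) -> sum7 f <= sum7 g.
Proof.
  intros H. unfold sum7.
  pose proof (H 0%nat); pose proof (H 1%nat); pose proof (H 2%nat); pose proof (H 3%nat);
  pose proof (H 4%nat); pose proof (H 5%nat); pose proof (H 6%nat). lra.
Qed.

Lemma sum7_nonneg (f : nat -> R) : (forall i, 0 <= f i) -> 0 <= sum7 f.
Proof. intros H. apply (sum7_le (fun _ => 0)) in H. unfold sum7 in *. lra. Qed.

Lemma sum7_mult_r (f : nat -> R) c : sum7 (fun i => f i * c) = sum7 f * c.
Proof. unfold sum7. ring. Qed.

Lemma sum7_abs_sq_le (e : nat -> R) :
  sum7 (fun i => Rabs (e i)) ^ 2 <= 7 * sum7 (fun i => e i ^ 2).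
Proof.
  unfold sum7. rewrite <- !(pow2_abs (e _)).
  set (m := sum7 (fun i => Rabs (e i)) / 7). unfold sum7 in m.
  pose proof (pow2_ge_0 (Rabs (e 0%nat) - m)); pose proof (pow2_ge_0 (Rabs (e 1%nat) - m));
  pose proof (pow2_ge_0 (Rabs (e 2%nat) - m)); pose proof (pow2_ge_0 (Rabs (e 3%nat) - m));
  pose proof (pow2_ge_0 (Rabs (e 4%nat) - m)); pose proof (pow2_ge_0 (Rabs (e 5%nat) - m));
  pose proof (pow2_ge_0 (Rabs (e 6%nat) - m)).
  unfold m in *. nra.
Qed.

Lemma coord_le_l1dist x y i : Rabs (coord i x - coord i y) <= l1dist x y.
Proof.
  unfold l1dist, sum7.
  pose proof (Rabs_pos (xS x - xS y)); pose proof (Rabs_pos (xEfc x - xEfc y));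
  pose proof (Rabs_pos (xEpc x - xEpc y)); pose proof (Rabs_pos (xIfc x - xIfc y));
  pose proof (Rabs_pos (xIpc x - xIpc y)); pose proof (Rabs_pos (xH x - xH y));
  pose proof (Rabs_pos (xR x - xR y)).
  destruct i as [|[|[|[|[|[|i]]]]]]; simpl; lra.
Qed.

Lemma l1dist_nonneg x y : 0 <= l1dist x y.
Proof. apply sum7_nonneg. intros; apply Rabs_pos. Qed.

Lemma l1dist_le x y c : (forall i, Rabs (coord i x - coord i y) <= c) -> l1dist x y <= 7 * c.
Proof. intros H. apply (sum7_le _ (fun _ => c)) in H. unfold l1dist, sum7 in *. lra. Qed.

Lemma l1dist_diag x : l1dist x x = 0.
Proof. unfold l1dist, sum7. rewrite !Rminus_diag, !Rabs_R0. ring. Qed.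

Lemma eq_of_l1dist_le0 x y : l1dist x y <= 0 -> x = y.
Proof.
  intros H. apply state_ext. intros i. pose proof (coord_le_l1dist x y i).
  destruct (Req_dec (coord i x - coord i y) 0) as [E|E]; [lra|].
  pose proof (Rabs_pos_lt _ E). lra.
Qed.

Lemma dist2_sum7 x y : dist2 x y = sum7 (fun i => (coord i x - coord i y) ^ 2).
Proof. reflexivity. Qed.

Lemma dist2_diag x : dist2 x x = 0.
Proof. unfold dist2. rewrite !Rminus_diag. ring. Qed.

Lemma Ntot_sum7 x : Ntot x = sum7 (fun i => coord i x).
Proof. reflexivity. Qed.

Lemma eq_of_dist2_le0 x y : dist2 x y <= 0 -> x = y.
Proof.
  rewrite dist2_sum7. intros H. apply eq_of_l1dist_le0.
  pose proof (sum7_abs_sq_le (fun i => coord i x - coord i y)) as Hsq.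
  pose proof (l1dist_nonneg x y). unfold l1dist. nra.
Qed.

(* With [E] the l1 norm of [e], the constant [21 = 3 * 7] comes from
   [2 E r <= E^2 + r^2] and [E^2 <= 7 |e|^2]. *)
Lemma inner_le_of_lipschitz (e d : nat -> R) L r : 0 <= L ->
  (forall i, Rabs (d i) <= L * (r + sum7 (fun j => Rabs (e j)))) ->
  sum7 (fun i => 2 * e i * d i) <= 21 * L * sum7 (fun i => e i ^ 2) + L * r ^ 2.
Proof.
  intros HL H. set (E := sum7 (fun j => Rabs (e j))) in *.
  assert (HE : 0 <= E) by (apply sum7_nonneg; intros; apply Rabs_pos).
  assert (Hinner : sum7 (fun i => 2 * e i * d i) <= sum7 (fun i => Rabs (e i) * (2 * L * (r + E)))).
  { apply sum7_le. intros i.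
    replace (Rabs (e i) * (2 * L * (r + E))) with (2 * (Rabs (e i) * (L * (r + E)))) by ring.
    rewrite Rmult_assoc. apply Rmult_le_compat_l; [lra|].
    eapply Rle_trans; [apply Rle_abs|]. rewrite Rabs_mult.
    apply Rmult_le_compat_l; [apply Rabs_pos | apply H]. }
  rewrite sum7_mult_r in Hinner. fold E in Hinner.
  pose proof (sum7_abs_sq_le e) as Hsq. fold E in Hsq.
  assert (2 * E * r <= E ^ 2 + r ^ 2) by (pose proof (pow2_ge_0 (E - r)); nra).
  assert (L * (2 * E * r) <= L * (E ^ 2 + r ^ 2)) by (apply Rmult_le_compat_l; lra).
  assert (L * E ^ 2 <= L * (7 * sum7 (fun i => e i ^ 2))) by (apply Rmult_le_compat_l; lra).
  nra.
Qed.

Lemma is_derive_sum7 (f : nat -> R -> R) (d : nat -> R) t :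
  (forall i, is_derive (f i) t (d i)) -> is_derive (fun s => sum7 (fun i => f i s)) t (sum7 d).
Proof.
  intros H. unfold sum7.
  repeat apply (is_derive_plus (K := R_AbsRing) (V := R_NormedModule)); apply H.
Qed.

Lemma cont_on_sum7 a b (f : nat -> R -> R) : a <= b ->
  (forall i, cont_on a b (f i)) -> cont_on a b (fun s => sum7 (fun i => f i s)).
Proof. intros Hab H. unfold sum7. repeat apply cont_on_plus; auto. Qed.

Lemma is_derive_dist2 (x y : R -> state) (dx dy : nat -> R) t :
  (forall i, is_derive (fun s => coord i (x s)) t (dx i)) ->
  (forall i, is_derive (fun s => coord i (y s)) t (dy i)) ->
  is_derive (fun s => dist2 (x s) (y s)) t
    (sum7 (fun i => 2 * (coord i (x t) - coord i (y t)) * (dx i - dy i))).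
Proof.
  intros Hx Hy.
  apply (is_derive_sum7 (fun i s => (coord i (x s) - coord i (y s)) ^ 2)). intros i.
  replace (2 * (coord i (x t) - coord i (y t)) * (dx i - dy i))
    with (INR 2 * (dx i - dy i) * (coord i (x t) - coord i (y t)) ^ Nat.pred 2) by (simpl; ring).
  apply (is_derive_pow (fun s => coord i (x s) - coord i (y s))).
  apply (is_derive_minus (fun s => coord i (x s)) (fun s => coord i (y s))); auto.
Qed.

Lemma cont_on_dist2 a b (x y : R -> state) : a <= b ->
  (forall i, cont_on a b (fun s => coord i (x s))) ->
  (forall i, cont_on a b (fun s => coord i (y s))) -> cont_on a b (fun s => dist2 (x s) (y s)).
Proof.
  intros Hab Hx Hy.
  apply (cont_on_sum7 a b (fun i s => (coord i (x s) - coord i (y s)) ^ 2) Hab). intros i.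
  apply (cont_on_comp a b (fun s => coord i (x s) - coord i (y s)) (fun v => v ^ 2) Hab).
  - apply cont_on_minus; auto.
  - intros v. apply (@ex_derive_continuous R_AbsRing R_NormedModule). auto_derive. auto.
Qed.

Lemma cont_on_l1dist a b (x y : R -> state) : a <= b ->
  (forall i, cont_on a b (fun s => coord i (x s))) ->
  (forall i, cont_on a b (fun s => coord i (y s))) -> cont_on a b (fun s => l1dist (x s) (y s)).
Proof.
  intros Hab Hx Hy.
  apply (cont_on_sum7 a b (fun i s => Rabs (coord i (x s) - coord i (y s))) Hab). intros i.
  apply (cont_on_comp a b (fun s => coord i (x s) - coord i (y s)) Rabs Hab).
  - apply cont_on_minus; auto.
  - intros v. apply (@continuous_abs R_AbsRing).
Qed.

(** * Global solutions for a bounded Lipschitz field *)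

Section Picard.

Variables (F : R -> state -> state) (x0 : state) (T L M : R).
Hypothesis T_nonneg : 0 <= T.
Hypothesis L_pos : 0 < L.
Hypothesis F_bounded : forall t x i, Rabs (coord i (F t x)) <= M.
Hypothesis F_lipschitz :
  forall t x y i, Rabs (coord i (F t x) - coord i (F t y)) <= L * l1dist x y.
Hypothesis F_continuous : forall u : R -> state,
  (forall i t, continuous (fun s => coord i (u s)) t) ->
  forall i t, continuous (fun s => coord i (F s (u s))) t.

Fixpoint picard (n : nat) : R -> state :=
  match n with
  | O => fun _ => x0
  | S m => fun t => state_of (fun i => coord i x0 + RInt (fun s => coord i (F s (picard m s))) 0 t)
  end.

Lemma coord_picard_S n t i :
  coord i (picard (S n) t) = coord i x0 + RInt (fun s => coord i (F s (picard n s))) 0 t.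
Proof. destruct i as [|[|[|[|[|[|i]]]]]]; reflexivity. Qed.

Lemma continuous_picard n i t : continuous (fun s => coord i (picard n s)) t.
Proof.
  revert i t. induction n as [|n IH]; intros i t.
  - apply continuous_const.
  - apply continuous_ext with
      (fun s => coord i x0 + RInt (fun s => coord i (F s (picard n s))) 0 s).
    { intros; rewrite coord_picard_S; auto. }
    apply continuous_Rplus; [apply continuous_const|].
    apply continuous_RInt_upper. intros; apply F_continuous, IH.
Qed.

Lemma continuous_F_picard n i t : continuous (fun s => coord i (F s (picard n s))) t.
Proof. apply F_continuous, continuous_picard. Qed.

Lemma M_nonneg : 0 <= M.
Proof. pose proof (F_bounded 0 x0 0). pose proof (Rabs_pos (coord 0 (F 0 x0))). lra. Qed.

(* In the norm weighted by [exp (14 L t)] one iteration halves the distance: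
   [7 L] bounds the l1 Lipschitz constant and [7 L / (14 L) = 1/2]. *)
Lemma picard_step_bound n t : 0 <= t <= T ->
  l1dist (picard (S n) t) (picard n t) <= 7 * M * T * (/ 2) ^ n * exp (14 * L * t).
Proof.
  pose proof M_nonneg as HM.
  assert (HC : forall k, 0 <= 7 * M * T * (/ 2) ^ k).
  { intros k. pose proof (half_pow_pos k). assert (0 <= M * T) by nra. nra. }
  revert t. induction n as [|n IH]; intros t Ht.
  - apply Rle_trans with (7 * (M * T)).
    + apply l1dist_le. intros i. rewrite coord_picard_S. simpl picard.
      rewrite Rplus_minus_l.
      eapply Rle_trans.
      { apply abs_RInt_le_const_dist; [apply ex_RInt_of_continuous, (continuous_F_picard 0)|].
        intros; apply F_bounded. }
      rewrite Rminus_0_r, Rabs_right by lra. apply Rmult_le_compat_l; lra.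
    + assert (1 <= exp (14 * L * t)) by (pose proof (exp_ineq1_le (14 * L * t)); nra).
      specialize (HC 0%nat). simpl pow in *. nra.
  - apply Rle_trans with (7 * (7 * M * T * (/ 2) ^ n * (exp (14 * L * t) - 1) / 14)).
    + apply l1dist_le. intros i. rewrite !coord_picard_S.
      rewrite Rminus_plus_l_l, <- RInt_minus_R
        by (apply ex_RInt_of_continuous, continuous_F_picard).
      eapply Rle_trans.
      { apply abs_RInt_le_dominated
          with (g := fun s => L * (7 * M * T * (/ 2) ^ n) * exp (14 * L * s)).
        - lra.
        - apply ex_RInt_of_continuous. intros.
          apply continuous_Rminus; apply continuous_F_picard.
        - apply ex_RInt_of_continuous. intros.
          apply (@ex_derive_continuous R_AbsRing R_NormedModule). auto_derive; auto.
        - intros s Hs. eapply Rle_trans; [apply F_lipschitz|].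
          rewrite Rmult_assoc. apply Rmult_le_compat_l; [lra | apply IH; lra]. }
      rewrite RInt_scal_exp by lra. right. field. lra.
    + specialize (HC n). simpl pow. pose proof (exp_pos (14 * L * t)). nra.
Qed.

Definition picard_const : R := 2 * (7 * M * T) * exp (14 * L * T).

Lemma picard_const_nonneg : 0 <= picard_const.
Proof.
  pose proof M_nonneg. pose proof (exp_pos (14 * L * T)).
  unfold picard_const. assert (0 <= M * T) by nra. nra.
Qed.

Lemma picard_cauchy t n m i : 0 <= t <= T -> (n <= m)%nat ->
  Rabs (coord i (picard m t) - coord i (picard n t)) <= picard_const * (/ 2) ^ n.
Proof.
  intros Ht Hnm.
  enough (Hk : forall k, Rabs (coord i (picard (n + k) t) - coord i (picard n t))
                         <= picard_const * ((/ 2) ^ n - (/ 2) ^ (n + k))).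
  { replace m with (n + (m - n))%nat by lia. eapply Rle_trans; [apply Hk|].
    pose proof (half_pow_pos (n + (m - n))). pose proof picard_const_nonneg. nra. }
  induction k as [|k IH].
  - rewrite Nat.add_0_r, !Rminus_diag, Rabs_R0. lra.
  - rewrite Nat.add_succ_r.
    replace (coord i (picard (S (n + k)) t) - coord i (picard n t)) with
      ((coord i (picard (S (n + k)) t) - coord i (picard (n + k) t))
       + (coord i (picard (n + k) t) - coord i (picard n t))) by ring.
    eapply Rle_trans; [apply Rabs_triang|].
    pose proof (coord_le_l1dist (picard (S (n + k)) t) (picard (n + k) t) i).
    pose proof (picard_step_bound (n + k) t Ht).
    pose proof M_nonneg. pose proof (half_pow_pos (n + k)).
    assert (exp (14 * L * t) <= exp (14 * L * T)) by (apply exp_le_exp_of_le; nra).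
    assert (0 <= 7 * M * T * (/ 2) ^ (n + k)) by (assert (0 <= M * T) by nra; nra).
    assert (7 * M * T * (/ 2) ^ (n + k) * exp (14 * L * t)
            <= 7 * M * T * (/ 2) ^ (n + k) * exp (14 * L * T)) by (apply Rmult_le_compat_l; auto).
    simpl pow. unfold picard_const in *. nra.
Qed.

(* The limit is taken at [clamp 0 T t] so that it is defined and Lipschitz on all of R. *)
Definition picard_lim (t : R) : state :=
  state_of (fun i => Lim_seq (fun n => coord i (picard n (clamp 0 T t)))).

Lemma coord_picard_lim i t :
  coord i (picard_lim t) = Lim_seq (fun n => coord i (picard n (clamp 0 T t))).
Proof. destruct i as [|[|[|[|[|[|i]]]]]]; reflexivity. Qed.

Lemma picard_lim_clamp t : picard_lim (clamp 0 T t) = picard_lim t.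
Proof.
  unfold picard_lim. rewrite (clamp_id 0 T (clamp 0 T t)) by (apply clamp_in; lra).
  reflexivity.
Qed.

Lemma picard_lim_bound i t n : 0 <= t <= T ->
  Rabs (coord i (picard n t) - coord i (picard_lim t)) <= picard_const * (/ 2) ^ n.
Proof.
  intros Ht. rewrite coord_picard_lim, (clamp_id 0 T t Ht).
  apply (Lim_seq_half_pow_bound (fun n => coord i (picard n t))).
  intros; apply picard_cauchy; auto.
Qed.

Lemma picard_lipschitz n i s t : Rabs (coord i (picard n s) - coord i (picard n t)) <= M * Rabs (s - t).
Proof.
  destruct n as [|n].
  - simpl. rewrite Rminus_diag, Rabs_R0. pose proof M_nonneg. pose proof (Rabs_pos (s - t)). nra.
  - rewrite !coord_picard_S.
    rewrite Rminus_plus_l_l, RInt_minus_lower by apply continuous_F_picard.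
    apply abs_RInt_le_const_dist; [apply ex_RInt_of_continuous, continuous_F_picard|].
    intros; apply F_bounded.
Qed.

Lemma picard_lim_lipschitz i s t :
  Rabs (coord i (picard_lim s) - coord i (picard_lim t)) <= M * Rabs (s - t).
Proof.
  pose proof M_nonneg as HM. pose proof picard_const_nonneg.
  rewrite <- (picard_lim_clamp s), <- (picard_lim_clamp t).
  eapply Rle_trans; [|apply Rmult_le_compat_l; [exact HM | apply (clamp_lipschitz 0 T s t T_nonneg)]].
  set (a := clamp 0 T s). set (a' := clamp 0 T t).
  assert (Ha : 0 <= a <= T) by (apply clamp_in; lra).
  assert (Ha' : 0 <= a' <= T) by (apply clamp_in; lra).
  apply le_of_half_pow_bound with (2 * picard_const). intros n.
  pose proof (picard_lim_bound i a n Ha). pose proof (picard_lim_bound i a' n Ha').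
  pose proof (picard_lipschitz n i a a').
  replace (coord i (picard_lim a) - coord i (picard_lim a')) with
    (- (coord i (picard n a) - coord i (picard_lim a))
     + (coord i (picard n a) - coord i (picard n a'))
     + (coord i (picard n a') - coord i (picard_lim a'))) by ring.
  eapply Rle_trans; [apply Rabs_triang|].
  eapply Rle_trans; [apply Rplus_le_compat_r, Rabs_triang|].
  rewrite Rabs_Ropp. lra.
Qed.

Lemma continuous_picard_lim i t : continuous (fun s => coord i (picard_lim s)) t.
Proof. apply (continuous_of_lipschitz _ M). intros; apply picard_lim_lipschitz. Qed.

Lemma continuous_F_picard_lim i t : continuous (fun s => coord i (F s (picard_lim s))) t.
Proof. apply F_continuous, continuous_picard_lim. Qed.

Lemma picard_lim_integral i t : 0 <= t <= T ->
  coord i (picard_lim t) = coord i x0 + RInt (fun s => coord i (F s (picard_lim s))) 0 t.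
Proof.
  intros Ht. pose proof picard_const_nonneg as HC.
  set (err := coord i (picard_lim t) - coord i x0
              - RInt (fun s => coord i (F s (picard_lim s))) 0 t).
  enough (Rabs err <= 0)
    by (pose proof (Rle_abs err); pose proof (Rle_abs (- err)); rewrite Rabs_Ropp in *;
        unfold err in *; lra).
  apply le_of_half_pow_bound with (picard_const + 7 * L * picard_const * T). intros n.
  pose proof (picard_lim_bound i t (S n) Ht) as Hlim. rewrite coord_picard_S in Hlim.
  assert (Hint : Rabs (RInt (fun s => coord i (F s (picard n s))) 0 t
                       - RInt (fun s => coord i (F s (picard_lim s))) 0 t)
                 <= 7 * L * picard_const * (/ 2) ^ n * Rabs (t - 0)).
  { assert (Hex : forall G : R -> state, (forall i t, continuous (fun s => coord i (G s)) t) ->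
                  ex_RInt (fun s => coord i (F s (G s))) 0 t)
      by (intros G HG; apply ex_RInt_of_continuous, F_continuous, HG).
    rewrite <- RInt_minus_R
      by (apply Hex; first [apply continuous_picard | apply continuous_picard_lim]).
    apply abs_RInt_le_const_dist.
    - apply ex_RInt_of_continuous. intros.
      apply continuous_Rminus; [apply continuous_F_picard | apply continuous_F_picard_lim].
    - intros s Hs. rewrite Rmin_left, Rmax_right in Hs by lra.
      eapply Rle_trans; [apply F_lipschitz|].
      replace (7 * L * picard_const * (/ 2) ^ n) with (L * (7 * (picard_const * (/ 2) ^ n))) by ring.
      apply Rmult_le_compat_l; [lra|]. apply l1dist_le. intros j. apply picard_lim_bound. lra. }
  rewrite Rminus_0_r, (Rabs_right t) in Hint by lra.
  simpl pow in Hlim.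
  assert (0 <= picard_const * (/ 2) ^ n) by (pose proof (half_pow_pos n); nra).
  assert (7 * L * picard_const * (/ 2) ^ n * t <= 7 * L * picard_const * T * (/ 2) ^ n).
  { replace (7 * L * picard_const * T * (/ 2) ^ n) with (7 * L * (picard_const * (/ 2) ^ n) * T) by ring.
    replace (7 * L * picard_const * (/ 2) ^ n * t) with (7 * L * (picard_const * (/ 2) ^ n) * t) by ring.
    apply Rmult_le_compat_l; [nra | lra]. }
  replace err with
    (- (coord i x0 + RInt (fun s => coord i (F s (picard n s))) 0 t - coord i (picard_lim t))
     + (RInt (fun s => coord i (F s (picard n s))) 0 t
        - RInt (fun s => coord i (F s (picard_lim s))) 0 t)) by (unfold err; ring).
  eapply Rle_trans; [apply Rabs_triang|]. rewrite Rabs_Ropp. nra.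
Qed.

Theorem picard_solution : exists y : R -> state, y 0 = x0 /\
  forall i, deriv_on 0 T (fun t => coord i (y t)) (fun t => coord i (F t (y t))).
Proof.
  exists picard_lim. split.
  - apply state_ext. intros i. rewrite picard_lim_integral by lra.
    rewrite RInt_point. change zero with 0. ring.
  - intros i. apply deriv_on_of_is_derive
      with (fun t => coord i x0 + RInt (fun s => coord i (F s (picard_lim s))) 0 t).
    { intros; apply picard_lim_integral; auto. }
    intros t _. rewrite <- (Rplus_0_l (coord i (F t (picard_lim t)))).
    apply (is_derive_plus (fun _ => coord i x0)).
    + apply (@is_derive_const R_AbsRing R_NormedModule).
    + apply is_derive_RInt_upper, continuous_F_picard_lim.
Qed.

End Picard.

(** * Uniqueness from a local energy estimate *)

Section LocalUniqueness.

Variables (y z : R -> state) (T : R) (dy dz : nat -> R -> R) (eta c : R).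
Hypothesis T_pos : 0 < T.
Hypothesis eta_pos : 0 < eta.
Hypothesis c_nonneg : 0 <= c.
Hypothesis y_deriv : forall i, deriv_on 0 T (fun s => coord i (y s)) (dy i).
Hypothesis z_deriv : forall i, deriv_on 0 T (fun s => coord i (z s)) (dz i).
Hypothesis energy_bound : forall t, 0 <= t <= T -> l1dist (z t) (y t) < eta ->
  sum7 (fun i => 2 * (coord i (z t) - coord i (y t)) * (dz i t - dy i t))
  <= c * dist2 (z t) (y t).

Lemma cont_on_l1dist_zy : cont_on 0 T (fun s => l1dist (z s) (y s)).
Proof.
  apply cont_on_l1dist; [lra | |]; intros i; eapply deriv_on_cont_on; auto.
Qed.

Lemma eq_right_of_eq m : 0 <= m < T -> z m = y m ->
  exists t1, m < t1 <= T /\ forall s, m <= s <= t1 -> z s = y s.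
Proof.
  intros Hm Hzy.
  destruct (cont_on_l1dist_zy m ltac:(lra) eta eta_pos) as [d [Hd Hclose]].
  set (t1 := Rmin (m + d / 2) T).
  assert (Ht1 : m < t1 <= T /\ t1 <= m + d / 2).
  { unfold t1. pose proof (Rmin_l (m + d / 2) T). pose proof (Rmin_r (m + d / 2) T).
    unfold Rmin; destruct Rle_dec; lra. }
  exists t1. split; [lra|]. intros s Hs.
  assert (Hnear : forall u, m <= u <= t1 -> l1dist (z u) (y u) < eta).
  { intros u Hu. specialize (Hclose u ltac:(lra) ltac:(rewrite Rabs_right; lra)).
    rewrite Hzy, l1dist_diag, Rminus_0_r in Hclose.
    pose proof (Rle_abs (l1dist (z u) (y u))). lra. }
  apply eq_of_dist2_le0.
  enough (HG : dist2 (z s) (y s) <= exp (c * (s - m)) * RInt (fun _ => 0) m s)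
    by (rewrite RInt_const in HG; change (scal (s - m) 0) with ((s - m) * 0) in HG;
        rewrite !Rmult_0_r in HG; exact HG).
  apply (gronwall m t1 (fun u => dist2 (z u) (y u))
    (fun u => sum7 (fun i => 2 * (coord i (z u) - coord i (y u)) * (dz i u - dy i u)))
    (fun _ => 0) c); try lra.
  - intros u Hu. apply is_derive_dist2; intros i; apply (deriv_on_is_derive 0 T); auto; lra.
  - apply cont_on_subinterval with 0 T; [lra | lra|].
    apply cont_on_dist2; [lra | |]; intros i; eapply deriv_on_cont_on; auto.
  - apply cont_on_of_continuous; [lra | intros; apply continuous_const].
  - intros; lra.
  - intros u Hu. cbv beta. rewrite Rplus_0_r. apply energy_bound; [lra | apply Hnear; lra].
  - cbv beta. rewrite Hzy, dist2_diag. lra.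
Qed.

(* The set of times up to which [z] and [y] agree is closed (by continuity) and open to the
   right (by [eq_right_of_eq]); its supremum is therefore [T]. *)
Lemma eq_of_local_energy_bound : z 0 = y 0 -> forall t, 0 <= t <= T -> z t = y t.
Proof.
  intros H0.
  set (E := fun t => 0 <= t <= T /\ forall s, 0 <= s <= t -> z s = y s).
  assert (HE0 : E 0) by (split; [lra | intros s Hs; replace s with 0 by lra; exact H0]).
  assert (HEb : bound E) by (exists T; intros t [Ht _]; lra).
  destruct (completeness E HEb (ex_intro _ 0 HE0)) as [m [Hub Hlub]].
  assert (Hm0 : 0 <= m) by (apply Hub; auto).
  assert (HmT : m <= T) by (apply Hlub; intros t [Ht _]; lra).
  assert (Hbelow : forall s, 0 <= s < m -> z s = y s).
  { intros s Hs. destruct (classic (exists t, E t /\ s < t)) as [[t [[_ Ht] Hst]]|Hn].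
    - apply Ht. lra.
    - exfalso. enough (m <= s) by lra. apply Hlub. intros t Et.
      destruct (Rle_dec t s); auto. exfalso; apply Hn. exists t; split; auto; lra. }
  assert (Hat : z m = y m).
  { destruct (Req_dec m 0) as [->|Hm]; auto.
    apply eq_of_l1dist_le0, Rle_plus_epsilon. intros eps Heps.
    destruct (cont_on_l1dist_zy m ltac:(lra) eps Heps) as [d [Hd H]].
    set (s := Rmax 0 (m - d / 2)).
    assert (Hs : 0 <= s < m /\ Rabs (s - m) < d).
    { unfold s, Rmax; destruct Rle_dec; rewrite Rabs_left; lra. }
    specialize (H s ltac:(lra) (proj2 Hs)).
    rewrite (Hbelow s (proj1 Hs)), l1dist_diag, Rabs_minus_sym, Rminus_0_r in H.
    pose proof (Rle_abs (l1dist (z m) (y m))). lra. }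
  assert (HmT' : m = T).
  { destruct (Req_dec m T) as [|Hne]; auto. exfalso.
    destruct (eq_right_of_eq m ltac:(lra) Hat) as [t1 [Ht1 Hright]].
    enough (Ht1E : E t1) by (pose proof (Hub t1 Ht1E); lra).
    split; [lra|]. intros s Hs. destruct (Rlt_dec s m); [apply Hbelow | apply Hright]; lra. }
  intros t Ht. destruct (Rlt_dec t m); [apply Hbelow; lra|]. replace t with m by lra. exact Hat.
Qed.

End LocalUniqueness.

(** * The truncated vector field *)

Definition bounded_lipschitz (f : R -> state -> R) : Prop :=
  exists c L, 0 <= c /\ 0 <= L /\ (forall b x, Rabs (f b x) <= c) /\
    (forall b x b' y, Rabs (f b x - f b' y) <= L * (Rabs (b - b') + l1dist x y)).

Lemma param_dist_nonneg b x b' y : 0 <= Rabs (b - b') + l1dist x y.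
Proof. pose proof (Rabs_pos (b - b')). pose proof (l1dist_nonneg x y). lra. Qed.

Lemma bounded_lipschitz_const k : bounded_lipschitz (fun _ _ => k).
Proof.
  exists (Rabs k), 0. repeat split; auto using Rabs_pos; try lra.
  - intros; lra.
  - intros. rewrite Rminus_diag, Rabs_R0. pose proof (param_dist_nonneg b x b' y). lra.
Qed.

Lemma bounded_lipschitz_plus f g : bounded_lipschitz f -> bounded_lipschitz g ->
  bounded_lipschitz (fun b x => f b x + g b x).
Proof.
  intros [c1 [L1 [? [? [Hb1 Hl1]]]]] [c2 [L2 [? [? [Hb2 Hl2]]]]].
  exists (c1 + c2), (L1 + L2). repeat split; try lra.
  - intros. eapply Rle_trans; [apply Rabs_triang|].
    specialize (Hb1 b x); specialize (Hb2 b x). lra.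
  - intros. replace (f b x + g b x - (f b' y + g b' y))
      with ((f b x - f b' y) + (g b x - g b' y)) by ring.
    eapply Rle_trans; [apply Rabs_triang|].
    specialize (Hl1 b x b' y); specialize (Hl2 b x b' y). lra.
Qed.

Lemma bounded_lipschitz_opp f : bounded_lipschitz f -> bounded_lipschitz (fun b x => - f b x).
Proof.
  intros [c [L [? [? [Hb Hl]]]]]. exists c, L. repeat split; auto.
  - intros. rewrite Rabs_Ropp. auto.
  - intros. replace (- f b x - - f b' y) with (- (f b x - f b' y)) by ring.
    rewrite Rabs_Ropp. auto.
Qed.

Lemma bounded_lipschitz_minus f g : bounded_lipschitz f -> bounded_lipschitz g ->
  bounded_lipschitz (fun b x => f b x - g b x).
Proof.
  intros. apply (bounded_lipschitz_plus f (fun b x => - g b x)); auto.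
  apply bounded_lipschitz_opp; auto.
Qed.

Lemma bounded_lipschitz_mult f g : bounded_lipschitz f -> bounded_lipschitz g ->
  bounded_lipschitz (fun b x => f b x * g b x).
Proof.
  intros [c1 [L1 [? [? [Hb1 Hl1]]]]] [c2 [L2 [? [? [Hb2 Hl2]]]]].
  exists (c1 * c2), (c1 * L2 + c2 * L1). repeat split; try nra.
  - intros. rewrite Rabs_mult. apply Rmult_le_compat; auto using Rabs_pos.
  - intros. replace (f b x * g b x - f b' y * g b' y)
      with (f b x * (g b x - g b' y) + g b' y * (f b x - f b' y)) by ring.
    eapply Rle_trans; [apply Rabs_triang|]. rewrite !Rabs_mult.
    pose proof (param_dist_nonneg b x b' y).
    assert (Rabs (f b x) * Rabs (g b x - g b' y) <= c1 * (L2 * (Rabs (b - b') + l1dist x y)))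
      by (apply Rmult_le_compat; auto using Rabs_pos).
    assert (Rabs (g b' y) * Rabs (f b x - f b' y) <= c2 * (L1 * (Rabs (b - b') + l1dist x y)))
      by (apply Rmult_le_compat; auto using Rabs_pos).
    nra.
Qed.

Lemma bounded_lipschitz_inv f n : 0 < n -> (forall b x, n <= f b x) ->
  bounded_lipschitz f -> bounded_lipschitz (fun b x => / f b x).
Proof.
  intros Hn Hf [c [L [? [? [_ Hl]]]]].
  assert (0 < / (n * n)) by (apply Rinv_0_lt_compat; nra).
  exists (/ n), (L / (n * n)). repeat split.
  - left; apply Rinv_0_lt_compat; auto.
  - apply Rmult_le_pos; lra.
  - intros. specialize (Hf b x). rewrite Rabs_right.
    + apply Rinv_le_contravar; auto.
    + left; apply Rinv_0_lt_compat; lra.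
  - intros. pose proof (Hf b x) as F1; pose proof (Hf b' y) as F2.
    replace (/ f b x - / f b' y) with ((f b' y - f b x) / (f b x * f b' y)) by (field; lra).
    unfold Rdiv. rewrite Rabs_mult, Rabs_inv, (Rabs_right (f b x * f b' y)) by nra.
    rewrite <- Rabs_Ropp, Ropp_minus_distr.
    specialize (Hl b x b' y). pose proof (param_dist_nonneg b x b' y).
    assert (/ (f b x * f b' y) <= / (n * n))
      by (apply Rinv_le_contravar; [nra | apply Rmult_le_compat; lra]).
    assert (0 < / (f b x * f b' y)) by (apply Rinv_0_lt_compat; nra).
    pose proof (Rabs_pos (f b x - f b' y)). nra.
Qed.

Lemma bounded_lipschitz_clamp_param lo hi : lo <= hi ->
  bounded_lipschitz (fun b _ => clamp lo hi b).
Proof.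
  intros H. exists (Rmax (Rabs lo) (Rabs hi)), 1. repeat split; try lra.
  - apply Rle_trans with (Rabs lo); [apply Rabs_pos | apply Rmax_l].
  - intros. pose proof (clamp_in lo hi b H). pose proof (Rmax_l (Rabs lo) (Rabs hi)).
    pose proof (Rmax_r (Rabs lo) (Rabs hi)). unfold Rabs in *. repeat destruct Rcase_abs; lra.
  - intros. pose proof (clamp_lipschitz lo hi b b' H). pose proof (l1dist_nonneg x y). lra.
Qed.

Lemma bounded_lipschitz_clamp_coord lo hi i : lo <= hi ->
  bounded_lipschitz (fun _ x => clamp lo hi (coord i x)).
Proof.
  intros H. exists (Rmax (Rabs lo) (Rabs hi)), 1. repeat split; try lra.
  - apply Rle_trans with (Rabs lo); [apply Rabs_pos | apply Rmax_l].
  - intros. pose proof (clamp_in lo hi (coord i x) H). pose proof (Rmax_l (Rabs lo) (Rabs hi)).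
    pose proof (Rmax_r (Rabs lo) (Rabs hi)). unfold Rabs in *. repeat destruct Rcase_abs; lra.
  - intros. pose proof (clamp_lipschitz lo hi (coord i x) (coord i y) H).
    pose proof (coord_le_l1dist x y i). pose proof (Rabs_pos (b - b')). lra.
Qed.

Lemma bounded_lipschitz_uniform (f : nat -> R -> state -> R) n :
  (forall i, bounded_lipschitz (f i)) -> (forall i, (n <= i)%nat -> f i = f n) ->
  exists c L, 0 <= L /\ forall i, (forall b x, Rabs (f i b x) <= c) /\
    (forall b x b' y, Rabs (f i b x - f i b' y) <= L * (Rabs (b - b') + l1dist x y)).
Proof.
  intros Hf Hn.
  assert (Hupto : forall m, exists c L, 0 <= c /\ 0 <= L /\ forall i, (i <= m)%nat ->
    (forall b x, Rabs (f i b x) <= c) /\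
    (forall b x b' y, Rabs (f i b x - f i b' y) <= L * (Rabs (b - b') + l1dist x y))).
  { induction m as [|m [c [L [Hc [HL IH]]]]].
    - destruct (Hf 0%nat) as [c [L [Hc [HL [Hb Hl]]]]]. exists c, L.
      split; [|split]; auto. intros i Hi. replace i with 0%nat by lia. auto.
    - destruct (Hf (S m)) as [c' [L' [Hc' [HL' [Hb Hl]]]]].
      exists (c + c'), (L + L'). split; [|split]; try lra. intros i Hi.
      destruct (Nat.le_gt_cases i m) as [Him|Him].
      + destruct (IH i Him) as [IHb IHl]. split; intros.
        * specialize (IHb b x). lra.
        * specialize (IHl b x b' y). pose proof (param_dist_nonneg b x b' y). nra.
      + replace i with (S m) by lia. split; intros.
        * specialize (Hb b x). lra.
        * specialize (Hl b x b' y). pose proof (param_dist_nonneg b x b' y). nra. }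
  destruct (Hupto n) as [c [L [Hc [HL Hall]]]]. exists c, L. split; auto. intros i.
  destruct (Nat.le_gt_cases i n) as [Hi|Hi]; [apply Hall, Hi|].
  rewrite (Hn i ltac:(lia)). apply Hall, le_n.
Qed.

Lemma bounded_lipschitz_continuous f (b : R -> R) (u : R -> state) t :
  bounded_lipschitz f -> continuous b t -> (forall i, continuous (fun s => coord i (u s)) t) ->
  continuous (fun s => f (b s) (u s)) t.
Proof.
  intros [c [L [_ [HL [_ Hl]]]]] Hb Hu.
  set (g := fun s => Rabs (b s - b t) + l1dist (u s) (u t)).
  assert (Hg : continuous g t).
  { unfold g, l1dist, sum7.
    repeat apply continuous_Rplus; apply continuous_Rabs, continuous_Rminus;
      solve [apply continuous_const | apply Hb | apply Hu]. }
  apply continuity_pt_filterlim in Hg. apply continuity_pt_filterlim.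
  intros eps Heps.
  destruct (Hg (eps / (L + 1)) ltac:(apply Rdiv_lt_0_compat; lra)) as [d [Hd H]].
  exists d; split; auto. intros s Hs. specialize (H s Hs). simpl in *. unfold Rdist in *.
  assert (Hgt : g t = 0) by (unfold g; rewrite Rminus_diag, Rabs_R0, l1dist_diag; ring).
  rewrite Hgt, Rminus_0_r in H.
  assert (0 <= g s) by apply param_dist_nonneg.
  rewrite Rabs_right in H by lra.
  specialize (Hl (b s) (u s) (b t) (u t)). fold (g s) in Hl.
  assert (g s * (L + 1) < eps).
  { apply (Rmult_lt_compat_r (L + 1)) in H; [|lra]. unfold Rdiv in H.
    rewrite Rmult_assoc, Rinv_l in H by lra. lra. }
  nra.
Qed.

(* The right-hand side with every compartment clamped to [lo, hi] and [beta] clamped to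
   [0, 1]; in the total population [S] is instead clamped below by [loN], which keeps the
   truncated population positive even when [lo = 0]. *)
Section TruncatedField.

Variables (P : params) (lo loN hi : R).

Definition clamped (i : nat) (x : state) : R := clamp lo hi (coord i x).

Definition Ntrunc (x : state) : R :=
  clamp loN hi (xS x) + clamped 1 x + clamped 2 x + clamped 3 x + clamped 4 x
  + clamped 5 x + clamped 6 x.

Definition infection_trunc (b : R) (x : state) : R :=
  clamp 0 1 b / Ntrunc x
  * (eps_Efc P * clamped 1 x + eps_Epc P * clamped 2 x + eps_Ifc P * clamped 3 x
     + eps_Ipc P * clamped 4 x + eps_H P * clamped 5 x)
  * clamped 0 x.

Definition transfer_trunc (i : nat) (x : state) : R :=
  match i with
  | 0%nat => - (mu P * clamped 0 x)
  | 1%nat => - ((gam_fc P + gam_plus P + sig_E P + mu P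
                 - gam_E P / Ntrunc x * clamped 2 x) * clamped 1 x)
  | 2%nat => - ((gam_pc P + gam_minus P + sig_E P + mu P
                 + gam_E P / Ntrunc x * clamped 1 x) * clamped 2 x)
  | 3%nat => gam_fc P * clamped 1 x + gam_minus P * clamped 2 x
       - (delta P + sig_I P + d_I P + mu P - gam_I P / Ntrunc x * clamped 4 x) * clamped 3 x
  | 4%nat => gam_pc P * clamped 2 x + gam_plus P * clamped 1 x
       - (delta P + sig_I P + d_I P + mu P + gam_I P / Ntrunc x * clamped 3 x) * clamped 4 x
  | 5%nat => delta P * (clamped 3 x + clamped 4 x) - (sig_H P + d_H P + mu P) * clamped 5 x
  | _ => sig_E P * (clamped 1 x + clamped 2 x) + sig_I P * (clamped 3 x + clamped 4 x)
         + sig_H P * clamped 5 x - mu P * clamped 6 x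
  end.

Definition infection_share (i : nat) (th : R) : R :=
  match i with 0%nat => -1 | 1%nat => th | 2%nat => 1 - th | _ => 0 end.

Definition field_trunc (pv : state) (th b : R) (x : state) : state :=
  state_of (fun i => coord i pv + infection_share i th * infection_trunc b x + transfer_trunc i x).

Lemma coord_field_trunc i pv th b x :
  coord i (field_trunc pv th b x)
  = coord i pv + infection_share i th * infection_trunc b x + transfer_trunc i x.
Proof. destruct i as [|[|[|[|[|[|i]]]]]]; reflexivity. Qed.

Lemma infection_share_bound i th : 0 <= th <= 1 -> Rabs (infection_share i th) <= 1.
Proof.
  intros. destruct i as [|[|[|i]]]; simpl; unfold Rabs; repeat destruct Rcase_abs; lra.
Qed.

Hypothesis lo_le_hi : lo <= hi.
Hypothesis loN_le_hi : loN <= hi.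
Hypothesis Ntrunc_lower_pos : 0 < loN + 6 * lo.

Lemma Ntrunc_ge x : loN + 6 * lo <= Ntrunc x.
Proof.
  unfold Ntrunc, clamped.
  pose proof (clamp_in loN hi (xS x) loN_le_hi).
  pose proof (clamp_in lo hi (coord 1 x) lo_le_hi). pose proof (clamp_in lo hi (coord 2 x) lo_le_hi).
  pose proof (clamp_in lo hi (coord 3 x) lo_le_hi). pose proof (clamp_in lo hi (coord 4 x) lo_le_hi).
  pose proof (clamp_in lo hi (coord 5 x) lo_le_hi). pose proof (clamp_in lo hi (coord 6 x) lo_le_hi).
  lra.
Qed.

Lemma bounded_lipschitz_clamped i : bounded_lipschitz (fun _ x => clamped i x).
Proof. apply bounded_lipschitz_clamp_coord, lo_le_hi. Qed.

Lemma bounded_lipschitz_inv_Ntrunc : bounded_lipschitz (fun _ x => / Ntrunc x).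
Proof.
  apply (bounded_lipschitz_inv (fun _ x => Ntrunc x) (loN + 6 * lo)); auto.
  - intros; apply Ntrunc_ge.
  - unfold Ntrunc. repeat apply bounded_lipschitz_plus; try apply bounded_lipschitz_clamped.
    apply (bounded_lipschitz_clamp_coord loN hi 0), loN_le_hi.
Qed.

Ltac bounded_lipschitz_tac :=
  unfold Rdiv;
  repeat first
    [ apply bounded_lipschitz_plus | apply bounded_lipschitz_minus
    | apply bounded_lipschitz_mult | apply bounded_lipschitz_opp
    | apply bounded_lipschitz_clamped | apply bounded_lipschitz_inv_Ntrunc
    | apply bounded_lipschitz_clamp_param; lra | apply bounded_lipschitz_const ].

Lemma bounded_lipschitz_infection_trunc : bounded_lipschitz infection_trunc.
Proof. unfold infection_trunc. bounded_lipschitz_tac. Qed.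

Lemma bounded_lipschitz_transfer_trunc i : bounded_lipschitz (fun _ x => transfer_trunc i x).
Proof. destruct i as [|[|[|[|[|[|i]]]]]]; unfold transfer_trunc; bounded_lipschitz_tac. Qed.

Lemma field_trunc_lipschitz : exists L, 0 < L /\ forall pv th b x b' y i, 0 <= th <= 1 ->
  Rabs (coord i (field_trunc pv th b x) - coord i (field_trunc pv th b' y))
  <= L * (Rabs (b - b') + l1dist x y).
Proof.
  destruct bounded_lipschitz_infection_trunc as [cA [LA [_ [HLA [_ HA]]]]].
  destruct (bounded_lipschitz_uniform (fun i _ x => transfer_trunc i x) 6
              bounded_lipschitz_transfer_trunc) as [cQ [LQ [HLQ HQ]]].
  { intros i Hi. destruct i as [|[|[|[|[|[|i]]]]]]; try lia; reflexivity. }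
  exists (LA + LQ + 1). split; [lra|].
  intros pv th b x b' y i Hth. rewrite !coord_field_trunc.
  replace (coord i pv + infection_share i th * infection_trunc b x + transfer_trunc i x
           - (coord i pv + infection_share i th * infection_trunc b' y + transfer_trunc i y))
    with (infection_share i th * (infection_trunc b x - infection_trunc b' y)
          + (transfer_trunc i x - transfer_trunc i y)) by ring.
  eapply Rle_trans; [apply Rabs_triang|]. rewrite Rabs_mult.
  specialize (HA b x b' y). destruct (HQ i) as [_ HQi]. specialize (HQi b x b' y).
  pose proof (infection_share_bound i th Hth). pose proof (param_dist_nonneg b x b' y).
  assert (Rabs (infection_share i th) * Rabs (infection_trunc b x - infection_trunc b' y)
          <= 1 * (LA * (Rabs (b - b') + l1dist x y)))
    by (apply Rmult_le_compat; auto using Rabs_pos).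
  nra.
Qed.

Lemma field_trunc_energy : exists L, 0 < L /\ forall pv th b b' x y, 0 <= th <= 1 ->
  sum7 (fun i => 2 * (coord i x - coord i y)
                   * (coord i (field_trunc pv th b x) - coord i (field_trunc pv th b' y)))
  <= 21 * L * dist2 x y + L * (b - b') ^ 2.
Proof.
  destruct field_trunc_lipschitz as [L [HL Hlip]]. exists L. split; [exact HL|].
  intros pv th b b' x y Hth. rewrite dist2_sum7, <- (pow2_abs (b - b')).
  apply inner_le_of_lipschitz; [lra|]. intros i. apply Hlip, Hth.
Qed.

Lemma field_trunc_bounded Mp : exists M, forall pv th b x i, 0 <= th <= 1 ->
  (forall j, Rabs (coord j pv) <= Mp) -> Rabs (coord i (field_trunc pv th b x)) <= M.
Proof.
  destruct bounded_lipschitz_infection_trunc as [cA [LA [HcA [_ [HA _]]]]].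
  destruct (bounded_lipschitz_uniform (fun i _ x => transfer_trunc i x) 6
              bounded_lipschitz_transfer_trunc) as [cQ [LQ [_ HQ]]].
  { intros i Hi. destruct i as [|[|[|[|[|[|i]]]]]]; try lia; reflexivity. }
  exists (Mp + cA + cQ).
  intros pv th b x i Hth Hp. rewrite coord_field_trunc.
  eapply Rle_trans; [apply Rabs_triang|].
  eapply Rle_trans; [apply Rplus_le_compat_r, Rabs_triang|]. rewrite Rabs_mult.
  specialize (HA b x). destruct (HQ i) as [HQi _]. specialize (HQi b x). specialize (Hp i).
  pose proof (infection_share_bound i th Hth).
  assert (Rabs (infection_share i th) * Rabs (infection_trunc b x) <= 1 * cA)
    by (apply Rmult_le_compat; auto using Rabs_pos).
  lra.
Qed.

Lemma continuous_field_trunc (pv : R -> state) (th b : R -> R) (u : R -> state) t :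
  (forall i, continuous (fun s => coord i (pv s)) t) -> continuous th t -> continuous b t ->
  (forall i, continuous (fun s => coord i (u s)) t) ->
  forall i, continuous (fun s => coord i (field_trunc (pv s) (th s) (b s) (u s))) t.
Proof.
  intros Hpv Hth Hb Hu i.
  apply continuous_ext with (fun s => coord i (pv s)
    + infection_share i (th s) * infection_trunc (b s) (u s) + transfer_trunc i (u s)).
  { intros; rewrite coord_field_trunc; auto. }
  apply continuous_Rplus; [apply continuous_Rplus; [auto|] |].
  - apply continuous_Rmult.
    + destruct i as [|[|[|i]]]; simpl; try apply continuous_const; auto.
      apply continuous_Rminus; [apply continuous_const | auto].
    + apply (bounded_lipschitz_continuous infection_trunc); auto.
      apply bounded_lipschitz_infection_trunc.
  - apply (bounded_lipschitz_continuous (fun _ x => transfer_trunc i x) (fun _ => 0)); auto.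
    + apply bounded_lipschitz_transfer_trunc.
    + apply continuous_const.
Qed.

End TruncatedField.

Definition inputs_at (I : inputs) (t : R) : state :=
  mkState (pS I t) (pEfc I t) (pEpc I t) (pIfc I t) (pIpc I t) (pH I t) (pR I t).

Definition in_box (Slo lo hi : R) (x : state) : Prop :=
  Slo <= xS x /\ forall i, lo <= coord i x <= hi.

Lemma in_box_weaken Slo lo hi Slo' lo' hi' x : Slo' <= Slo -> lo' <= lo -> hi <= hi' ->
  in_box Slo lo hi x -> in_box Slo' lo' hi' x.
Proof. intros H1 H2 H3 [HS Hx]. split; [lra|]. intros i. specialize (Hx i). lra. Qed.

Lemma in_box_of_l1dist_lt Slo lo hi eta x y : in_box Slo lo hi y -> l1dist x y < eta ->
  in_box (Slo - eta) (lo - eta) (hi + eta) x.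
Proof.
  intros [HS Hy] Hxy.
  assert (Hc : forall i, Rabs (coord i x - coord i y) < eta)
    by (intros i; pose proof (coord_le_l1dist x y i); lra).
  split.
  - destruct (Rabs_def2 _ _ (Hc 0%nat)). simpl in *. lra.
  - intros i. specialize (Hy i). destruct (Rabs_def2 _ _ (Hc i)). lra.
Qed.

Lemma field_trunc_rhs P lo loN hi I theta beta t x : lo <= loN -> in_box loN lo hi x ->
  0 <= beta t <= 1 ->
  field_trunc P lo loN hi (inputs_at I t) (theta t) (beta t) x = rhs P I theta beta t x.
Proof.
  intros Hlo [HS Hx] Hb.
  pose proof (Hx 0%nat); pose proof (Hx 1%nat); pose proof (Hx 2%nat); pose proof (Hx 3%nat);
  pose proof (Hx 4%nat); pose proof (Hx 5%nat); pose proof (Hx 6%nat). simpl in *.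
  unfold field_trunc, state_of, infection_trunc, transfer_trunc, infection_share, Ntrunc,
    clamped, rhs, Gam, Ntot. simpl.
  rewrite !clamp_id by lra. f_equal; ring.
Qed.

Lemma Ntot_field_trunc P lo loN hi pv th b x :
  Ntot (field_trunc P lo loN hi pv th b x) = Ntot pv
    - mu P * sum7 (fun i => clamped lo hi i x)
    - d_I P * (clamped lo hi 3 x + clamped lo hi 4 x) - d_H P * clamped lo hi 5 x.
Proof. unfold Ntot, field_trunc, transfer_trunc, infection_share, sum7. simpl. ring. Qed.

Definition eps_sum (P : params) : R := eps_Efc P + eps_Epc P + eps_Ifc P + eps_Ipc P + eps_H P.

Lemma infection_trunc_bounds P loN hi b x : params_ok P -> 0 < loN <= hi ->
  0 <= infection_trunc P 0 loN hi b x <= eps_sum P * clamped 0 hi 0 x.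
Proof.
  intros HP HlN. destruct HP as [_ [HE1 [HE2 [HE3 [HE4 [HE5 _]]]]]].
  assert (Hc : forall j, 0 <= clamped 0 hi j x <= hi) by (intros; apply clamp_in; lra).
  pose proof (Hc 0%nat); pose proof (Hc 1%nat); pose proof (Hc 2%nat); pose proof (Hc 3%nat);
  pose proof (Hc 4%nat); pose proof (Hc 5%nat); pose proof (Hc 6%nat).
  assert (HN : 0 < Ntrunc 0 loN hi x)
    by (pose proof (Ntrunc_ge 0 loN hi ltac:(lra) ltac:(lra) x); lra).
  set (E := eps_Efc P * clamped 0 hi 1 x + eps_Epc P * clamped 0 hi 2 x
            + eps_Ifc P * clamped 0 hi 3 x + eps_Ipc P * clamped 0 hi 4 x
            + eps_H P * clamped 0 hi 5 x).
  assert (HE : 0 <= E <= eps_sum P * Ntrunc 0 loN hi x).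
  { unfold E, eps_sum, Ntrunc. pose proof (clamp_in loN hi (xS x) ltac:(lra)). split; nra. }
  assert (HEN : 0 <= E / Ntrunc 0 loN hi x <= eps_sum P).
  { split; [apply Rdiv_le_0_compat; lra|].
    apply Rmult_le_reg_r with (Ntrunc 0 loN hi x); [lra|].
    unfold Rdiv. rewrite Rmult_assoc, Rinv_l, Rmult_1_r by lra. lra. }
  pose proof (clamp_in 0 1 b ltac:(lra)) as Hb.
  unfold infection_trunc. fold E.
  replace (clamp 0 1 b / Ntrunc 0 loN hi x * E * clamped 0 hi 0 x)
    with (clamp 0 1 b * (E / Ntrunc 0 loN hi x) * clamped 0 hi 0 x) by (field; lra).
  split; [apply Rmult_le_pos; [apply Rmult_le_pos|]; lra|].
  apply Rmult_le_compat_r; [lra|]. unfold eps_sum in *. nra.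
Qed.

Lemma field_trunc_nonneg_of_neg P loN hi pv th b x i : params_ok P -> 0 < loN <= hi ->
  0 <= th <= 1 -> (forall j, 0 <= coord j pv) -> coord i x < 0 ->
  0 <= coord i (field_trunc P 0 loN hi pv th b x).
Proof.
  intros HP HlN Hth Hpv Hx. rewrite coord_field_trunc.
  pose proof (infection_trunc_bounds P loN hi b x HP HlN) as HA.
  assert (Hc : forall j, 0 <= clamped 0 hi j x <= hi) by (intros; apply clamp_in; lra).
  assert (Hz : clamped 0 hi i x = 0)
    by (unfold clamped, clamp, Rmax, Rmin; repeat destruct Rle_dec; lra).
  pose proof (Hpv i) as Hp.
  pose proof (Hc 0%nat); pose proof (Hc 1%nat); pose proof (Hc 2%nat); pose proof (Hc 3%nat);
  pose proof (Hc 4%nat); pose proof (Hc 5%nat); pose proof (Hc 6%nat).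
  destruct HP as [Hmu [_ [_ [_ [_ [_ [Hfc [Hpc [Hplus [Hminus [Hdelta
                 [HdI [HdH [HsE [HsI [HsH _]]]]]]]]]]]]]]]].
  destruct i as [|[|[|[|[|[|i]]]]]]; unfold infection_share, transfer_trunc; simpl in Hz, Hp |- *.
  - rewrite Hz in HA |- *. lra.
  - rewrite Hz. nra.
  - rewrite Hz. nra.
  - rewrite Hz. nra.
  - rewrite Hz. nra.
  - rewrite Hz. nra.
  - change (clamped 0 hi (S (S (S (S (S (S i)))))) x) with (clamped 0 hi 6 x) in Hz.
    rewrite Hz. nra.
Qed.

Lemma field_trunc_S_ge P loN hi pv th b x : params_ok P -> 0 < loN <= hi ->
  xS pv - (eps_sum P + mu P) * clamped 0 hi 0 x <= xS (field_trunc P 0 loN hi pv th b x).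
Proof.
  intros HP HlN. change (xS (field_trunc P 0 loN hi pv th b x))
    with (coord 0 (field_trunc P 0 loN hi pv th b x)).
  rewrite coord_field_trunc. pose proof (infection_trunc_bounds P loN hi b x HP HlN).
  unfold infection_share, transfer_trunc. simpl. lra.
Qed.

(** * The model on [0, T] *)

Lemma inputs_bound I : inputs_ok I -> exists Mp, forall j t, Rabs (coord j (inputs_at I t)) <= Mp.
Proof.
  intros [[[M0 H0] _] [[[M1 H1] _] [[[M2 H2] _] [[[M3 H3] _] [[[M4 H4] _]
           [[[M5 H5] _] [[M6 H6] _]]]]]]].
  exists (Rabs M0 + Rabs M1 + Rabs M2 + Rabs M3 + Rabs M4 + Rabs M5 + Rabs M6).
  pose proof (Rle_abs M0); pose proof (Rle_abs M1); pose proof (Rle_abs M2); pose proof (Rle_abs M3);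
  pose proof (Rle_abs M4); pose proof (Rle_abs M5); pose proof (Rle_abs M6).
  pose proof (Rabs_pos M0); pose proof (Rabs_pos M1); pose proof (Rabs_pos M2); pose proof (Rabs_pos M3);
  pose proof (Rabs_pos M4); pose proof (Rabs_pos M5); pose proof (Rabs_pos M6).
  intros j t. destruct j as [|[|[|[|[|[|j]]]]]]; simpl;
    [specialize (H0 t) | specialize (H1 t) | specialize (H2 t) | specialize (H3 t)
    | specialize (H4 t) | specialize (H5 t) | specialize (H6 t)]; lra.
Qed.

Lemma inputs_at_nonneg I : inputs_ok I -> forall j t, 0 <= coord j (inputs_at I t).
Proof.
  intros [[_ [H0 _]] [[_ [H1 _]] [[_ [H2 _]] [[_ [H3 _]] [[_ [H4 _]] [[_ [H5 _]]
           [_ [H6 _]]]]]]]] j t.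
  destruct j as [|[|[|[|[|[|j]]]]]]; simpl; auto.
Qed.

Lemma continuous_inputs_at I : inputs_ok I -> forall i t, continuous (fun s => coord i (inputs_at I s)) t.
Proof.
  assert (Hc : forall p, input_ok p -> forall t, continuous p t).
  { intros p [_ [_ Hd]] t. apply (@ex_derive_continuous R_AbsRing R_NormedModule), (Hd 1%nat t). }
  intros [H0 [H1 [H2 [H3 [H4 [H5 H6]]]]]] i t.
  destruct i as [|[|[|[|[|[|i]]]]]]; simpl; apply Hc; auto.
Qed.

Lemma is_solution_deriv_on P I theta beta T x0 x : is_solution P I theta beta T x0 x ->
  forall i, deriv_on 0 T (fun s => coord i (x s)) (fun s => coord i (rhs P I theta beta s (x s))).
Proof.
  intros [_ [H0 [H1 [H2 [H3 [H4 [H5 H6]]]]]]] i. destruct i as [|[|[|[|[|[|i]]]]]]; assumption.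
Qed.

Lemma is_solution_of_deriv_on P I theta beta T x0 x : x 0 = x0 ->
  (forall i, deriv_on 0 T (fun s => coord i (x s)) (fun s => coord i (rhs P I theta beta s (x s)))) ->
  is_solution P I theta beta T x0 x.
Proof.
  intros H0 Hd. split; [exact H0|].
  repeat split; [apply (Hd 0%nat) | apply (Hd 1%nat) | apply (Hd 2%nat) | apply (Hd 3%nat)
                | apply (Hd 4%nat) | apply (Hd 5%nat) | apply (Hd 6%nat)].
Qed.

Lemma beta_ok_unit T blo bhi beta : 0 <= blo -> bhi <= 1 -> beta_ok T blo bhi beta ->
  beta_ok T 0 1 beta.
Proof. intros Hlo Hhi [Hc Hb]. split; [exact Hc|]. intros t Ht. specialize (Hb t Ht). lra. Qed.

Lemma coord_le_Ntot x i : (forall j, 0 <= coord j x) -> coord i x <= Ntot x.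
Proof.
  intros H. unfold Ntot.
  pose proof (H 0%nat); pose proof (H 1%nat); pose proof (H 2%nat); pose proof (H 3%nat);
  pose proof (H 4%nat); pose proof (H 5%nat); pose proof (H 6%nat).
  destruct i as [|[|[|[|[|[|i]]]]]]; simpl in *; lra.
Qed.

Section Model.

Variables (P : params) (I : inputs) (T : R) (theta : R -> R) (x0 : state) (Mp : R).
Hypothesis P_ok : params_ok P.
Hypothesis I_ok : inputs_ok I.
Hypothesis T_pos : 0 < T.
Hypothesis theta_cont : cont_on 0 T theta.
Hypothesis theta_range : forall t, 0 <= t <= T -> 0 <= theta t <= 1.
Hypothesis x0_ok : init_ok x0.
Hypothesis inputs_le : forall j t, Rabs (coord j (inputs_at I t)) <= Mp.

(* The invariant box: the inflow is at most [7 Mp], so the population stays below [Nmax];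
   the per-capita outflow of [S] is at most [S_rate], so [S] stays above [Smin]. *)
Definition Nmax : R := Ntot x0 + 7 * Mp * T.
Definition S_rate : R := eps_sum P + mu P.
Definition Smin : R := xS x0 * exp (- (S_rate * T)).

(* [theta] and [beta] are only controlled on [0, T]; precomposing with [clamp 0 T] extends them
   continuously to R, as Picard iteration needs. *)
Definition theta_ext (s : R) : R := theta (clamp 0 T s).

Definition field (beta : R -> R) (t : R) (x : state) : state :=
  field_trunc P 0 Smin Nmax (inputs_at I t) (theta_ext t) (beta (clamp 0 T t)) x.

Lemma Mp_nonneg : 0 <= Mp.
Proof. pose proof (inputs_le 0 0). pose proof (Rabs_pos (coord 0 (inputs_at I 0))). lra. Qed.

Lemma S_rate_pos : 0 < S_rate.
Proof. unfold S_rate, eps_sum. destruct P_ok as [? [? [? [? [? [? _]]]]]]. lra. Qed.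

Lemma x0_nonneg j : 0 <= coord j x0.
Proof. destruct x0_ok as [? [? [? [? [? [? ?]]]]]]. destruct j as [|[|[|[|[|[|j]]]]]]; simpl; lra. Qed.

Lemma Smin_pos : 0 < Smin.
Proof. unfold Smin. destruct x0_ok. apply Rmult_lt_0_compat; [lra | apply exp_pos]. Qed.

Lemma Smin_le_Nmax : Smin <= Nmax.
Proof.
  assert (exp (- (S_rate * T)) <= 1)
    by (rewrite <- exp_0; apply exp_le_exp_of_le; pose proof S_rate_pos; nra).
  pose proof (coord_le_Ntot x0 0 x0_nonneg). pose proof Mp_nonneg. pose proof Smin_pos.
  unfold Smin, Nmax in *. destruct x0_ok. simpl in *. nra.
Qed.

Lemma theta_ext_range t : 0 <= theta_ext t <= 1.
Proof. apply theta_range, clamp_in. lra. Qed.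

Lemma exists_field_solution beta : beta_ok T 0 1 beta -> exists y : R -> state, y 0 = x0 /\
  forall i, deriv_on 0 T (fun t => coord i (y t)) (fun t => coord i (field beta t (y t))).
Proof.
  intros [Hb _]. pose proof Smin_pos. pose proof Smin_le_Nmax.
  destruct (field_trunc_lipschitz P 0 Smin Nmax ltac:(lra) ltac:(lra) ltac:(lra)) as [L [HL Hlip]].
  destruct (field_trunc_bounded P 0 Smin Nmax ltac:(lra) ltac:(lra) ltac:(lra) Mp) as [M HM].
  apply (picard_solution (field beta) x0 T L M); [lra | exact HL | | |].
  - intros t x i. unfold field. apply HM; [apply theta_ext_range | intros j; apply inputs_le].
  - intros t x y i. unfold field. eapply Rle_trans; [apply Hlip, theta_ext_range|].
    rewrite Rminus_diag, Rabs_R0, Rplus_0_l. lra.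
  - intros u Hu i t. unfold field. apply continuous_field_trunc; auto; try lra.
    + intros; apply continuous_inputs_at, I_ok.
    + apply cont_on_continuous_clamp; [lra | exact theta_cont].
    + apply cont_on_continuous_clamp; [lra | exact Hb].
Qed.

Lemma field_rhs beta t x : 0 <= t <= T -> 0 <= beta t <= 1 -> in_box Smin 0 Nmax x ->
  field beta t x = rhs P I theta beta t x.
Proof.
  intros Ht Hb Hx. pose proof Smin_pos. unfold field, theta_ext. rewrite !(clamp_id 0 T t Ht).
  apply field_trunc_rhs; auto. lra.
Qed.

Section FieldSolution.

Variables (beta : R -> R) (y : R -> state).
Hypothesis beta_unit : beta_ok T 0 1 beta.
Hypothesis y_init : y 0 = x0.
Hypothesis y_deriv :
  forall i, deriv_on 0 T (fun t => coord i (y t)) (fun t => coord i (field beta t (y t))).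

Lemma field_solution_is_derive i t : 0 < t < T ->
  is_derive (fun s => coord i (y s)) t (coord i (field beta t (y t))).
Proof. exact (deriv_on_is_derive 0 T _ _ t (y_deriv i)). Qed.

Lemma field_solution_cont_on i : cont_on 0 T (fun t => coord i (y t)).
Proof. eapply deriv_on_cont_on, y_deriv. Qed.

Lemma field_solution_nonneg i t : 0 <= t <= T -> 0 <= coord i (y t).
Proof.
  pose proof Smin_pos. pose proof Smin_le_Nmax.
  apply (deriv_on_nonneg 0 T _ _ ltac:(lra) (y_deriv i)).
  - cbv beta. rewrite y_init. apply x0_nonneg.
  - intros s Hs Hneg. unfold field.
    apply field_trunc_nonneg_of_neg;
      [exact P_ok | split; lra | apply theta_ext_range
      | intros j; apply inputs_at_nonneg, I_ok | exact Hneg].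
Qed.

Lemma field_solution_Ntot_le t : 0 <= t <= T -> Ntot (y t) <= Ntot x0 + 7 * Mp * t.
Proof.
  intros Ht. pose proof Smin_pos. pose proof Smin_le_Nmax.
  enough (Hmono : Ntot x0 + 7 * Mp * 0 - Ntot (y 0) <= Ntot x0 + 7 * Mp * t - Ntot (y t))
    by (rewrite y_init in Hmono; lra).
  apply (le_of_derive_nonneg 0 t (fun s => Ntot x0 + 7 * Mp * s - Ntot (y s))
           (fun s => 7 * Mp - Ntot (field beta s (y s)))); [lra | | |].
  - intros s Hs. apply (is_derive_minus (fun s => Ntot x0 + 7 * Mp * s) (fun s => Ntot (y s))).
    + auto_derive; auto. ring.
    + exact (is_derive_sum7 (fun i s => coord i (y s)) (fun i => coord i (field beta s (y s))) s
               (fun i => field_solution_is_derive i s ltac:(lra))).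
  - apply cont_on_minus; [lra | apply cont_on_of_continuous; [lra|] |].
    + intros. apply (@ex_derive_continuous R_AbsRing R_NormedModule). auto_derive. auto.
    + apply cont_on_subinterval with 0 T; [lra | lra |].
      apply (cont_on_sum7 0 T (fun i s => coord i (y s))); [lra | apply field_solution_cont_on].
  - intros s Hs. unfold field. rewrite Ntot_field_trunc.
    assert (Hc : forall j, 0 <= clamped 0 Nmax j (y s)) by (intros; apply clamp_in; lra).
    assert (Ntot (inputs_at I s) <= 7 * Mp).
    { assert (Hle : sum7 (fun j => coord j (inputs_at I s)) <= sum7 (fun _ => Mp)).
      { apply sum7_le. intros j. eapply Rle_trans; [apply Rle_abs | apply inputs_le]. }
      rewrite Ntot_sum7. unfold sum7 at 2 in Hle. lra. }
    pose proof (sum7_nonneg _ Hc).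
    destruct P_ok as [Hmu [_ [_ [_ [_ [_ [_ [_ [_ [_ [_ [HdI [HdH _]]]]]]]]]]]]].
    pose proof (Hc 3%nat); pose proof (Hc 4%nat); pose proof (Hc 5%nat). nra.
Qed.

Lemma field_solution_le_Nmax i t : 0 <= t <= T -> coord i (y t) <= Nmax.
Proof.
  intros Ht. pose proof (field_solution_Ntot_le t Ht). pose proof Mp_nonneg.
  pose proof (coord_le_Ntot (y t) i (fun j => field_solution_nonneg j t Ht)).
  assert (Mp * t <= Mp * T) by (apply Rmult_le_compat_l; lra).
  unfold Nmax. lra.
Qed.

Lemma field_solution_S_ge t : 0 <= t <= T -> Smin <= xS (y t).
Proof.
  intros Ht. pose proof Smin_pos. pose proof Smin_le_Nmax. pose proof S_rate_pos.
  assert (Hgrow : xS x0 <= xS (y t) * exp (S_rate * t)).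
  { replace (xS x0) with (xS (y 0) * exp (S_rate * 0)) by (rewrite y_init, Rmult_0_r, exp_0; ring).
    apply (le_of_derive_nonneg 0 t (fun s => xS (y s) * exp (S_rate * s))
      (fun s => (coord 0 (field beta s (y s)) + S_rate * xS (y s)) * exp (S_rate * s))); [lra | | |].
    - intros s Hs. replace ((coord 0 (field beta s (y s)) + S_rate * xS (y s)) * exp (S_rate * s))
        with (coord 0 (field beta s (y s)) * exp (S_rate * s) + xS (y s) * (S_rate * exp (S_rate * s)))
        by ring.
      apply (is_derive_mult (fun s => xS (y s)) (fun s => exp (S_rate * s)));
        [apply (field_solution_is_derive 0); lra | auto_derive; auto; ring | intros; apply Rmult_comm].
    - apply cont_on_mult;
        [lra | apply cont_on_subinterval with 0 T; [lra | lra | apply (field_solution_cont_on 0)] |].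
      apply cont_on_of_continuous; [lra|]. intros.
      apply (@ex_derive_continuous R_AbsRing R_NormedModule). auto_derive. auto.
    - intros s Hs. apply Rmult_le_pos; [|left; apply exp_pos].
      assert (Hcl : clamped 0 Nmax 0 (y s) = xS (y s)).
      { apply clamp_id. split; [apply (field_solution_nonneg 0) | apply (field_solution_le_Nmax 0)]; lra. }
      pose proof (field_trunc_S_ge P Smin Nmax (inputs_at I s) (theta_ext s) (beta (clamp 0 T s))
                    (y s) P_ok ltac:(lra)) as HS.
      rewrite Hcl in HS. pose proof (inputs_at_nonneg I I_ok 0 s). simpl in *.
      unfold field, S_rate in *. lra. }
  assert (Hdecay : exp (- (S_rate * T)) <= exp (- (S_rate * t))) by (apply exp_le_exp_of_le; nra).
  assert (Hinv : exp (S_rate * t) * exp (- (S_rate * t)) = 1)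
    by (rewrite <- exp_plus, Rplus_opp_r; apply exp_0).
  destruct x0_ok as [HS0 _]. unfold Smin.
  apply Rle_trans with (xS x0 * exp (- (S_rate * t))); [apply Rmult_le_compat_l; lra|].
  apply (Rmult_le_compat_r (exp (- (S_rate * t)))) in Hgrow; [|left; apply exp_pos].
  rewrite Rmult_assoc, Hinv, Rmult_1_r in Hgrow. exact Hgrow.
Qed.

Lemma field_solution_in_box t : 0 <= t <= T -> in_box Smin 0 Nmax (y t).
Proof.
  intros Ht. split; [apply field_solution_S_ge, Ht|].
  intros i. split; [apply field_solution_nonneg | apply field_solution_le_Nmax]; exact Ht.
Qed.

Lemma field_solution_is_solution : is_solution P I theta beta T x0 y.
Proof.
  apply is_solution_of_deriv_on; [exact y_init|]. intros i.
  apply deriv_on_ext with (fun t => coord i (field beta t (y t))); [|apply y_deriv].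
  intros t Ht. rewrite field_rhs; auto.
  - destruct beta_unit as [_ Hb]. apply Hb, Ht.
  - apply field_solution_in_box, Ht.
Qed.

(* Near [y], any solution lies in a slightly larger box, on which a second truncation
   (with [eta = Smin / 14], so that the truncated population stays positive) agrees with [rhs]
   and is Lipschitz. *)
Lemma field_solution_unique z : is_solution P I theta beta T x0 z ->
  forall t, 0 <= t <= T -> z t = y t.
Proof.
  intros Hz. pose proof Smin_pos. pose proof Smin_le_Nmax.
  set (eta := Smin / 14).
  destruct (field_trunc_energy P (- eta) (Smin / 2) (Nmax + Smin)
              ltac:(unfold eta; lra) ltac:(lra) ltac:(unfold eta; lra)) as [L [HL Henergy]].
  apply (eq_of_local_energy_bound y z T
           (fun i t => coord i (rhs P I theta beta t (y t)))
           (fun i t => coord i (rhs P I theta beta t (z t))) eta (21 * L));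
    [lra | unfold eta; lra | lra | exact (is_solution_deriv_on _ _ _ _ _ _ _ field_solution_is_solution)
    | exact (is_solution_deriv_on _ _ _ _ _ _ _ Hz) |
    | destruct Hz as [Hz0 _]; rewrite Hz0, y_init; reflexivity].
  intros t Ht Hclose.
  assert (Hbig : forall x, in_box (Smin - eta) (0 - eta) (Nmax + eta) x ->
                           in_box (Smin / 2) (- eta) (Nmax + Smin) x)
    by (intros x; apply in_box_weaken; unfold eta; lra).
  assert (Hy : in_box (Smin / 2) (- eta) (Nmax + Smin) (y t)).
  { apply Hbig, (in_box_weaken Smin 0 Nmax); try (unfold eta; lra).
    apply field_solution_in_box, Ht. }
  assert (Hz' : in_box (Smin / 2) (- eta) (Nmax + Smin) (z t)).
  { apply Hbig, (in_box_of_l1dist_lt Smin 0 Nmax eta (z t) (y t));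
      [apply field_solution_in_box, Ht | exact Hclose]. }
  destruct beta_unit as [_ Hb].
  rewrite <- (field_trunc_rhs P (- eta) (Smin / 2) (Nmax + Smin) I theta beta t (z t)),
          <- (field_trunc_rhs P (- eta) (Smin / 2) (Nmax + Smin) I theta beta t (y t))
    by (auto; unfold eta; lra).
  eapply Rle_trans; [apply Henergy, theta_range, Ht|].
  rewrite Rminus_diag. simpl. lra.
Qed.

End FieldSolution.

Lemma solution_exists_unique beta : beta_ok T 0 1 beta ->
  exists x, is_solution P I theta beta T x0 x /\
    forall z, is_solution P I theta beta T x0 z -> forall t, 0 <= t <= T -> z t = x t.
Proof.
  intros Hb. destruct (exists_field_solution beta Hb) as [y [Hy0 Hyd]].
  exists y. split; [apply field_solution_is_solution | apply field_solution_unique]; auto.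
Qed.

Lemma solution_in_box beta x : beta_ok T 0 1 beta -> is_solution P I theta beta T x0 x ->
  forall t, 0 <= t <= T -> in_box Smin 0 Nmax (x t).
Proof.
  intros Hb Hx t Ht. destruct (exists_field_solution beta Hb) as [y [Hy0 Hyd]].
  rewrite (field_solution_unique beta y Hb Hy0 Hyd x Hx t Ht).
  apply (field_solution_in_box beta y Hy0 Hyd t Ht).
Qed.

Lemma solution_energy_bound L beta bhat x xhat s : 0 <= s <= T ->
  beta_ok T 0 1 beta -> beta_ok T 0 1 bhat ->
  in_box Smin 0 Nmax x -> in_box Smin 0 Nmax xhat ->
  (forall pv th b b' x y, 0 <= th <= 1 ->
     sum7 (fun i => 2 * (coord i x - coord i y)
                      * (coord i (field_trunc P 0 Smin Nmax pv th b x)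
                         - coord i (field_trunc P 0 Smin Nmax pv th b' y)))
     <= 21 * L * dist2 x y + L * (b - b') ^ 2) ->
  sum7 (fun i => 2 * (coord i x - coord i xhat)
                   * (coord i (rhs P I theta beta s x) - coord i (rhs P I theta bhat s xhat)))
  <= 21 * L * dist2 x xhat + L * (beta s - bhat s) ^ 2.
Proof.
  intros Hs [_ Hb] [_ Hbh] Hx Hxh Henergy.
  rewrite <- (field_rhs beta s x), <- (field_rhs bhat s xhat) by auto.
  unfold field. rewrite (clamp_id 0 T s Hs).
  apply Henergy, theta_ext_range.
Qed.

Theorem solution_stability : exists C, 0 < C /\
  forall beta bhat x xhat, beta_ok T 0 1 beta -> beta_ok T 0 1 bhat ->
    is_solution P I theta beta T x0 x -> is_solution P I theta bhat T x0 xhat ->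
    forall t, 0 <= t <= T ->
      dist2 (x t) (xhat t) <= C * RInt (fun s => (beta s - bhat s) ^ 2) 0 t.
Proof.
  pose proof Smin_pos. pose proof Smin_le_Nmax.
  destruct (field_trunc_energy P 0 Smin Nmax ltac:(lra) ltac:(lra) ltac:(lra)) as [L [HL Henergy]].
  exists (exp (21 * L * T) * L). split; [apply Rmult_lt_0_compat; [apply exp_pos | lra]|].
  intros beta bhat x xhat Hb Hbh Hx Hxh t Ht.
  set (h := fun s => (beta s - bhat s) ^ 2).
  assert (Hh : cont_on 0 T h).
  { apply (cont_on_comp 0 T (fun s => beta s - bhat s) (fun v => v ^ 2)); [lra | |].
    - apply cont_on_minus; [lra | apply Hb | apply Hbh].
    - intros v. apply (@ex_derive_continuous R_AbsRing R_NormedModule). auto_derive. auto. }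
  assert (Hex : ex_RInt h 0 t)
    by (apply ex_RInt_of_cont_on; [lra | apply cont_on_subinterval with 0 T; auto; lra]).
  assert (Hh0 : 0 <= RInt h 0 t) by (apply RInt_ge_0; auto; [lra | intros; apply pow2_ge_0]).
  assert (Hx' := is_solution_deriv_on _ _ _ _ _ _ _ Hx).
  assert (Hxh' := is_solution_deriv_on _ _ _ _ _ _ _ Hxh).
  assert (HW : dist2 (x t) (xhat t) <= exp (21 * L * (t - 0)) * RInt (fun s => L * h s) 0 t).
  { apply (gronwall 0 T (fun s => dist2 (x s) (xhat s))
      (fun s => sum7 (fun i => 2 * (coord i (x s) - coord i (xhat s))
                  * (coord i (rhs P I theta beta s (x s)) - coord i (rhs P I theta bhat s (xhat s)))))
      (fun s => L * h s) (21 * L)); try lra.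
    - intros s Hs. apply is_derive_dist2; intros i;
        [apply (deriv_on_is_derive 0 T _ _ s (Hx' i)) | apply (deriv_on_is_derive 0 T _ _ s (Hxh' i))];
        lra.
    - apply cont_on_dist2; [lra | |]; intros i; eapply deriv_on_cont_on; [apply Hx' | apply Hxh'].
    - apply cont_on_mult; [lra | | exact Hh].
      apply cont_on_of_continuous; [lra | intros; apply continuous_const].
    - intros s Hs. apply Rmult_le_pos; [lra | apply pow2_ge_0].
    - intros s Hs. apply solution_energy_bound; auto;
        [apply (solution_in_box beta) | apply (solution_in_box bhat)]; auto.
    - destruct Hx as [-> _]. destruct Hxh as [-> _]. cbv beta. rewrite dist2_diag. lra. }
  assert (Hscal : RInt (fun s => L * h s) 0 t = L * RInt h 0 t)
    by exact (RInt_scal (V := R_CompleteNormedModule) h 0 t L Hex).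
  rewrite Hscal, Rminus_0_r in HW.
  assert (Hexp : exp (21 * L * t) <= exp (21 * L * T)) by (apply exp_le_exp_of_le; nra).
  assert (HLh : 0 <= L * RInt h 0 t) by (apply Rmult_le_pos; lra).
  eapply Rle_trans; [exact HW|]. rewrite (Rmult_assoc (exp (21 * L * T))).
  apply Rmult_le_compat_r; [exact HLh | exact Hexp].
Qed.

End Model.

Theorem proposition3 (P : params) (I : inputs) (blo bhi : R) (T : R)
  (theta : R -> R) (x0 : state) :
  params_ok P -> inputs_ok I -> 0 < blo -> blo <= bhi -> bhi <= 1 ->
  0 < T ->
  cont_on 0 T theta -> (forall t, 0 <= t <= T -> 0 <= theta t <= 1) ->
  init_ok x0 ->
  (forall beta : R -> R, beta_ok T blo bhi beta ->
     exists x : R -> state, is_solution P I theta beta T x0 x /\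
       forall y : R -> state, is_solution P I theta beta T x0 y ->
         forall t, 0 <= t <= T -> y t = x t) /\
  (exists C : R, 0 < C /\
     forall (beta bhat : R -> R) (x xhat : R -> state),
       beta_ok T blo bhi beta -> beta_ok T blo bhi bhat ->
       is_solution P I theta beta T x0 x ->
       is_solution P I theta bhat T x0 xhat ->
       forall t, 0 <= t <= T ->
         dist2 (x t) (xhat t) <= C * RInt (fun s => (beta s - bhat s)^2) 0 t).
Proof.
  intros HP HI Hblo _ Hbhi HT Hth Hth01 Hx0.
  destruct (inputs_bound I HI) as [Mp HMp].
  assert (Hunit : forall beta, beta_ok T blo bhi beta -> beta_ok T 0 1 beta)
    by (intros beta; apply beta_ok_unit; lra).
  split.
  - intros beta Hb. apply (solution_exists_unique P I T theta x0 Mp); auto.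
  - destruct (solution_stability P I T theta x0 Mp) as [C [HC Hstab]]; auto.
    exists C. split; [exact HC|]. intros. apply Hstab; auto.
Qed.
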